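(* Let $f \in \mathcal{C}_{2\pi}$, let $A_n[f]$ be the Toeplitz matrix generated by $f$ and $c_n[f]$ the optimal circulant preconditioner for $A_n[f]$. For every $\epsilon>0$ there exist positive integers $N$ and $M$ such that for every $n>N$ there are matrices $\mathcal R_n[f],\mathcal E_n[f]\in\mathbb{C}^{n\times n}$ with \[ \sin c_n[f]-\sin A_n[f] = \mathcal R_n[f]+\mathcal E_n[f],\qquad \operatorname{rank}\mathcal R_n[f]\le 2M,\qquad \|\mathcal E_n[f]\|_2\le\epsilon. \]
   Context: $\mathcal{C}_{2\pi}$ denotes the Banach space of all $2\pi$-periodic continuous complex-valued functions on $\mathbb{R}$ with the supremum norm $\|\cdot\|_\infty$. For $f\in\mathcal{C}_{2\pi}$ its Fourier coefficients are $a_k=\frac{1}{2\pi}\int_{-\pi}^{\pi} f(\theta)e^{-\mathbf{i}k\theta}\,d\theta$, $k\in\mathbb{Z}$. The Toeplitz matrix generated by $f$ is the $n\times n$ matrix $A_n[f]$ whose $(j,k)$ entry is $a_{j-k}$. The optimal circulant preconditioner $c_n[f]$ is the $n\times n$ circulant matrix whose $(j,k)$ entry is $c_{(j-k)\bmod n}$, where $c_k=\frac{(n-k)a_k+k\,a_{k-n}}{n}$ for $0\le k<n$. For a square matrix $X$, $\sin X=\sum_{m\ge0}\frac{(-1)^m}{(2m+1)!}X^{2m+1}$. $\|\cdot\|_2$ is the spectral norm. *)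

(* Stdlib (classical reals).  Complex numbers are modelled as pairs of
   reals, n x n complex matrices as functions nat -> nat -> Cx (only entries
   with indices < n are meaningful). *)
From Stdlib Require Import Reals ZArith Lia ClassicalEpsilon.
Open Scope R_scope.

Definition Cx : Type := (R * R)%type.
Definition C0 : Cx := (0, 0).
Definition RtoC (r : R) : Cx := (r, 0).
Definition Cadd (z w : Cx) : Cx := (fst z + fst w, snd z + snd w).
Definition Csub (z w : Cx) : Cx := (fst z - fst w, snd z - snd w).
Definition Cmul (z w : Cx) : Cx :=
  (fst z * fst w - snd z * snd w, fst z * snd w + snd z * fst w).
Definition Cscal (r : R) (z : Cx) : Cx := (r * fst z, r * snd z).
Definition Cnorm2 (z : Cx) : R := fst z * fst z + snd z * snd z.

Definition Cseq_cv (u : nat -> Cx) (l : Cx) : Prop :=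
  Un_cv (fun k => fst (u k)) (fst l) /\ Un_cv (fun k => snd (u k)) (snd l).

Fixpoint Csum (g : nat -> Cx) (n : nat) : Cx :=
  match n with
  | O => C0
  | S m => Cadd (Csum g m) (g m)
  end.

Fixpoint Rsum (g : nat -> R) (n : nat) : R :=
  match n with
  | O => 0
  | S m => Rsum g m + g m
  end.

Definition in_C2pi (f : R -> Cx) : Prop :=
  continuity (fun x => fst (f x)) /\ continuity (fun x => snd (f x)) /\
  (forall x, f (x + 2 * PI) = f x).

(* ---------- Riemann integral (total version, correct for integrable g) ---------- *)
Definition RInt (g : R -> R) (a b : R) : R :=
  epsilon (inhabits 0)
    (fun I => exists pr : Riemann_integrable g a b, RiemannInt pr = I).

(* Fourier coefficient a_k = 1/(2pi) int_{-pi}^{pi} f(t) e^{-i k t} dt,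
   with f = u + i v:  f e^{-ikt} = (u cos + v sin) + i (v cos - u sin). *)
Definition fourier (f : R -> Cx) (k : Z) : Cx :=
  let u := fun t => fst (f t) in
  let v := fun t => snd (f t) in
  let kt := fun t => IZR k * t in
  ( / (2 * PI) * RInt (fun t => u t * cos (kt t) + v t * sin (kt t)) (- PI) PI,
    / (2 * PI) * RInt (fun t => v t * cos (kt t) - u t * sin (kt t)) (- PI) PI).

Definition Mat : Type := nat -> nat -> Cx.

Definition toeplitz (f : R -> Cx) (n : nat) : Mat :=
  fun j k => fourier f (Z.of_nat j - Z.of_nat k)%Z.

Definition circ_coef (f : R -> Cx) (n k : nat) : Cx :=
  Cscal (/ INR n)
    (Cadd (Cscal (INR n - INR k) (fourier f (Z.of_nat k)))
          (Cscal (INR k) (fourier f (Z.of_nat k - Z.of_nat n)%Z))).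

Definition opt_circulant (f : R -> Cx) (n : nat) : Mat :=
  fun j k => circ_coef f n (Z.to_nat (Z.modulo (Z.of_nat j - Z.of_nat k) (Z.of_nat n))).

Definition Madd (X Y : Mat) : Mat := fun i j => Cadd (X i j) (Y i j).
Definition Msub (X Y : Mat) : Mat := fun i j => Csub (X i j) (Y i j).
Definition Mscal (r : R) (X : Mat) : Mat := fun i j => Cscal r (X i j).
Definition Mmul (n : nat) (X Y : Mat) : Mat :=
  fun i j => Csum (fun l => Cmul (X i l) (Y l j)) n.
Definition Mid : Mat := fun i j => if Nat.eqb i j then RtoC 1 else C0.
Definition M0 : Mat := fun _ _ => C0.

Fixpoint Mpow (n : nat) (X : Mat) (p : nat) : Mat :=
  match p with
  | O => Mid
  | S q => Mmul n X (Mpow n X q)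
  end.

Fixpoint sin_partial (n : nat) (X : Mat) (N : nat) : Mat :=
  match N with
  | O => M0
  | S m => Madd (sin_partial n X m)
                (Mscal ((-1) ^ m / INR (fact (2 * m + 1))) (Mpow n X (2 * m + 1)))
  end.

Definition Msin (n : nat) (X : Mat) : Mat :=
  fun i j => epsilon (inhabits C0)
               (fun z => Cseq_cv (fun N => sin_partial n X N i j) z).

Definition Mapply (n : nat) (X : Mat) (x : nat -> Cx) : nat -> Cx :=
  fun i => Csum (fun l => Cmul (X i l) (x l)) n.
Definition vnorm (n : nat) (x : nat -> Cx) : R := sqrt (Rsum (fun i => Cnorm2 (x i)) n).

Definition spec_norm_le (n : nat) (X : Mat) (eps : R) : Prop :=
  forall x : nat -> Cx, vnorm n (Mapply n X x) <= eps * vnorm n x.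

(* rank X <= r : the column space of X is spanned by r vectors u_0,...,u_{r-1}
   in Cx^n, i.e. every column j is a linear combination sum_l w_{l j} u_l. *)
Definition rank_le (n : nat) (X : Mat) (r : nat) : Prop :=
  exists (u : nat -> nat -> Cx) (w : nat -> nat -> Cx),
    forall i j, (i < n)%nat -> (j < n)%nat ->
      X i j = Csum (fun l => Cmul (w l j) (u l i)) r.

From Pilot Require Import Defs.
From Stdlib Require Import Reals ZArith Lia Lra Psatz ClassicalEpsilon.
From Coquelicot Require Import Coquelicot.
(* Coquelicot also defines [RtoC] and [RInt]; those of [Defs] must take precedence. *)
Import Defs.
Open Scope R_scope.

(* The optimal circulant [c_n[f]] is the average of the [n] cyclic conjugates of
   [A_n[f]], so both have spectral norm at most [sup |f|], by the integral
   representation of the Toeplitz form.  Replacing [f] by its Fejer mean [p], a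
   trigonometric polynomial of degree below [M] that is uniformly close to [f],
   the matrix [c_n[p] - A_n[p]] vanishes off a band of width [M] except in its
   first and last [M] rows, and inside that band its entries are [O(M/n)].  Hence
   [c_n[f] - A_n[f]] is a matrix of rank [<= 2M] plus one of small norm once [n]
   is large.  Finally [C^p - A^p = C (C^(p-1) - A^(p-1)) + (C - A) A^(p-1)]
   propagates such a splitting to every power, and with the norms of [C], [A]
   uniformly bounded the sine series can be truncated at a degree independent of
   [n]. *)

(** * Finite sums *)

Lemma Cx_ext (z w : Cx) : fst z = fst w -> snd z = snd w -> z = w.
Proof. destruct z, w; simpl; intros; subst; reflexivity. Qed.

Ltac Cx_unfold := unfold Madd, Msub, Mscal, M0, Cadd, Csub, Cmul, Cscal, C0, RtoC; simpl.
Ltac Cx_ring := apply Cx_ext; Cx_unfold; ring.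
Ltac Cx_field := apply Cx_ext; Cx_unfold; field.

Lemma Rsum_ext g h n : (forall i, (i < n)%nat -> g i = h i) -> Rsum g n = Rsum h n.
Proof. induction n; simpl; intros H; auto. rewrite IHn by (intros; apply H; lia). rewrite H by lia. auto. Qed.

Lemma Rsum_plus g h n : Rsum (fun i => g i + h i) n = Rsum g n + Rsum h n.
Proof. induction n; simpl; [lra|]. rewrite IHn; lra. Qed.
Lemma Rsum_minus g h n : Rsum (fun i => g i - h i) n = Rsum g n - Rsum h n.
Proof. induction n; simpl; [lra|]. rewrite IHn; lra. Qed.
Lemma Rsum_scal c g n : Rsum (fun i => c * g i) n = c * Rsum g n.
Proof. induction n; simpl; [lra|]. rewrite IHn; lra. Qed.
Lemma Rsum_zero n : Rsum (fun _ => 0) n = 0.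
Proof. induction n; simpl; lra. Qed.
Lemma Rsum_const c n : Rsum (fun _ => c) n = c * INR n.
Proof. induction n; simpl Rsum. simpl; ring. rewrite IHn, S_INR. ring. Qed.
Lemma Rsum_le g h n : (forall i, (i < n)%nat -> g i <= h i) -> Rsum g n <= Rsum h n.
Proof. induction n; simpl; intros H; [lra|]. pose proof (H n ltac:(lia)). pose proof (IHn ltac:(intros; apply H; lia)). lra. Qed.
Lemma Rsum_nonneg g n : (forall i, (i < n)%nat -> 0 <= g i) -> 0 <= Rsum g n.
Proof. intros H. rewrite <- (Rsum_zero n). apply Rsum_le. auto. Qed.
Lemma Rsum_swap (F : nat -> nat -> R) n m :
  Rsum (fun i => Rsum (fun j => F i j) m) n = Rsum (fun j => Rsum (fun i => F i j) n) m.
Proof. induction n; simpl. rewrite Rsum_zero; auto. rewrite IHn, <- Rsum_plus. auto. Qed.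
Lemma Rsum_split g a b : Rsum g (a + b) = Rsum g a + Rsum (fun i => g (a + i)%nat) b.
Proof. induction b; simpl. rewrite Nat.add_0_r; lra. rewrite Nat.add_succ_r; simpl. rewrite IHb; lra. Qed.
Lemma Rsum_single g k n : (k < n)%nat ->
  Rsum (fun i => if Nat.eqb i k then g i else 0) n = g k.
Proof. induction n; intros H; simpl. lia. destruct (Nat.eq_dec k n).
  - subst. rewrite Nat.eqb_refl. rewrite Rsum_ext with (h := fun _ => 0). rewrite Rsum_zero; lra.
    intros i Hi. destruct (Nat.eqb_spec i n); [lia|auto].
  - rewrite IHn by lia. destruct (Nat.eqb_spec n k); [lia|lra]. Qed.
Lemma Rsum_le_term g k n : (k < n)%nat -> (forall i, (i < n)%nat -> 0 <= g i) -> g k <= Rsum g n.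
Proof. intros Hk H. rewrite <- (Rsum_single g k n Hk). apply Rsum_le. intros i Hi.
  destruct (Nat.eqb i k); [lra|auto]. Qed.

Lemma Csum_fst g n : fst (Csum g n) = Rsum (fun i => fst (g i)) n.
Proof. induction n; simpl; auto. rewrite IHn; auto. Qed.
Lemma Csum_snd g n : snd (Csum g n) = Rsum (fun i => snd (g i)) n.
Proof. induction n; simpl; auto. rewrite IHn; auto. Qed.
Lemma Csum_ext g h n : (forall i, (i < n)%nat -> g i = h i) -> Csum g n = Csum h n.
Proof. intros H; apply Cx_ext; rewrite ?Csum_fst, ?Csum_snd; apply Rsum_ext; intros; rewrite H; auto. Qed.
Lemma Csum_swap (F : nat -> nat -> Cx) n m :
  Csum (fun i => Csum (fun j => F i j) m) n = Csum (fun j => Csum (fun i => F i j) n) m.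
Proof. apply Cx_ext; rewrite ?Csum_fst, ?Csum_snd.
  - rewrite Rsum_ext with (h := fun i => Rsum (fun j => fst (F i j)) m) by (intros; apply Csum_fst).
    rewrite Rsum_swap. apply Rsum_ext; intros; rewrite Csum_fst; auto.
  - rewrite Rsum_ext with (h := fun i => Rsum (fun j => snd (F i j)) m) by (intros; apply Csum_snd).
    rewrite Rsum_swap. apply Rsum_ext; intros; rewrite Csum_snd; auto. Qed.
Lemma Cmul_Csum_l a g n : Cmul a (Csum g n) = Csum (fun i => Cmul a (g i)) n.
Proof. induction n; simpl. apply Cx_ext; simpl; ring. rewrite <- IHn. apply Cx_ext; simpl; ring. Qed.
Lemma Cmul_Csum_r a g n : Cmul (Csum g n) a = Csum (fun i => Cmul (g i) a) n.
Proof. induction n; simpl. apply Cx_ext; simpl; ring. rewrite <- IHn. apply Cx_ext; simpl; ring. Qed.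
Lemma Csum_add g h n : Csum (fun i => Cadd (g i) (h i)) n = Cadd (Csum g n) (Csum h n).
Proof. apply Cx_ext; simpl; rewrite ?Csum_fst, ?Csum_snd; simpl; apply Rsum_plus. Qed.
Lemma Csum_sub g h n : Csum (fun i => Csub (g i) (h i)) n = Csub (Csum g n) (Csum h n).
Proof. apply Cx_ext; simpl; rewrite ?Csum_fst, ?Csum_snd; simpl; apply Rsum_minus. Qed.
Lemma Csum_scal c g n : Csum (fun i => Cscal c (g i)) n = Cscal c (Csum g n).
Proof. apply Cx_ext; simpl; rewrite ?Csum_fst, ?Csum_snd; simpl; apply Rsum_scal. Qed.
Lemma Csum_zero n : Csum (fun _ => C0) n = C0.
Proof. apply Cx_ext; rewrite ?Csum_fst, ?Csum_snd; simpl; apply Rsum_zero. Qed.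
Lemma Csum_single g k n : (k < n)%nat ->
  Csum (fun i => if Nat.eqb i k then g i else C0) n = g k.
Proof. intros H; apply Cx_ext; rewrite ?Csum_fst, ?Csum_snd.
  - rewrite <- (Rsum_single (fun i => fst (g i)) k n H). apply Rsum_ext; intros; destruct Nat.eqb; auto.
  - rewrite <- (Rsum_single (fun i => snd (g i)) k n H). apply Rsum_ext; intros; destruct Nat.eqb; auto. Qed.
Lemma Csum_split g a b : Csum g (a + b) = Cadd (Csum g a) (Csum (fun i => g (a + i)%nat) b).
Proof. apply Cx_ext; simpl; rewrite ?Csum_fst, ?Csum_snd; apply Rsum_split. Qed.

(** * Operator-norm and rank bounds *)

Definition Cdot (a b : Cx) : R := fst a * fst b + snd a * snd b.
Definition sqnorm (n : nat) (x : nat -> Cx) : R := Rsum (fun i => Cnorm2 (x i)) n.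
Definition rdot (n : nat) (y x : nat -> Cx) : R := Rsum (fun i => Cdot (y i) (x i)) n.

Lemma Cnorm2_nonneg z : 0 <= Cnorm2 z.
Proof. unfold Cnorm2; nra. Qed.
Lemma sqnorm_nonneg n x : 0 <= sqnorm n x.
Proof. apply Rsum_nonneg; intros; apply Cnorm2_nonneg. Qed.
Lemma sqnorm_ext n x y : (forall i, (i < n)%nat -> x i = y i) -> sqnorm n x = sqnorm n y.
Proof. intros H; apply Rsum_ext; intros; rewrite H; auto. Qed.

Lemma rdot_sq_le n a b : (rdot n a b)^2 <= sqnorm n a * sqnorm n b.
Proof.
  set (A := sqnorm n a). set (B := sqnorm n b). set (P := rdot n a b).
  assert (Hq : forall t, 0 <= A * t^2 - 2 * P * t + B).
  { intros t. assert (E : A * t^2 - 2*P*t + B =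
       Rsum (fun i => Cnorm2 (Csub (Cscal t (a i)) (b i))) n).
    { rewrite Rsum_ext with (h := fun i => t^2 * Cnorm2 (a i) - (2*t) * Cdot (a i) (b i) + Cnorm2 (b i)).
      rewrite Rsum_plus, Rsum_minus, !Rsum_scal. unfold A, B, P, sqnorm, rdot. ring.
      intros. unfold Cnorm2, Cdot, Csub, Cscal; simpl; ring. }
    rewrite E. apply Rsum_nonneg; intros; apply Cnorm2_nonneg. }
  assert (HA : 0 <= A) by apply sqnorm_nonneg. assert (HB : 0 <= B) by apply sqnorm_nonneg.
  destruct (Req_dec A 0) as [HA0|HA0].
  - destruct (Req_dec P 0) as [HP|HP].
    + rewrite HP, HA0. nra.
    + exfalso. specialize (Hq ((B+1)/(2*P))). rewrite HA0 in Hq.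
      replace (0 * ((B + 1) / (2 * P)) ^ 2 - 2 * P * ((B + 1) / (2 * P)) + B) with (-1) in Hq by (field; auto). lra.
  - specialize (Hq (P / A)).
    replace (A * (P / A) ^ 2 - 2 * P * (P / A) + B) with (B - P^2/A) in Hq by (field; auto).
    assert (P^2 / A <= B) by lra. apply Rmult_le_compat_l with (r := A) in H; [|lra].
    replace (A * (P^2/A)) with (P^2) in H by (field; auto). lra.
Qed.

Lemma Cnorm2_Csum_mul_le n a b : Cnorm2 (Csum (fun j => Cmul (a j) (b j)) n) <= sqnorm n a * sqnorm n b.
Proof.
  set (z := Csum (fun j => Cmul (a j) (b j)) n).
  set (v := fun j => Cmul (fst (a j), - snd (a j)) z).
  assert (E1 : rdot n v b = Cnorm2 z).
  { assert (Hf : fst z = Rsum (fun j => fst (Cmul (a j) (b j))) n) by (unfold z; apply Csum_fst).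
    assert (Hs : snd z = Rsum (fun j => snd (Cmul (a j) (b j))) n) by (unfold z; apply Csum_snd).
    unfold Cnorm2. replace (fst z * fst z + snd z * snd z) with
      (fst z * Rsum (fun j => fst (Cmul (a j) (b j))) n + snd z * Rsum (fun j => snd (Cmul (a j) (b j))) n) by (rewrite <- Hf, <- Hs; ring).
    unfold rdot. rewrite <- Rsum_scal, <- Rsum_scal, <- Rsum_plus. apply Rsum_ext; intros.
    unfold v, Cdot, Cmul; simpl. ring. }
  assert (E2 : sqnorm n v = Cnorm2 z * sqnorm n a).
  { unfold sqnorm. rewrite <- Rsum_scal. apply Rsum_ext; intros. unfold v, Cnorm2, Cmul; simpl; ring. }
  pose proof (rdot_sq_le n v b) as H. rewrite E1, E2 in H.
  pose proof (Cnorm2_nonneg z). pose proof (sqnorm_nonneg n a). pose proof (sqnorm_nonneg n b).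
  destruct (Req_dec (Cnorm2 z) 0) as [Hz0|Hz0]. rewrite Hz0; nra.
  assert (Cnorm2 z * Cnorm2 z <= Cnorm2 z * (sqnorm n a * sqnorm n b)) by nra.
  apply Rmult_le_reg_l with (Cnorm2 z); lra.
Qed.

(* [opnorm_le n X d] says [||X||_2 <= d], stated with squared norms to avoid square roots. *)
Definition opnorm_le (n : nat) (X : Mat) (d : R) : Prop :=
  0 <= d /\ forall x, sqnorm n (Mapply n X x) <= d^2 * sqnorm n x.

Lemma Mapply_ext n X Y x : (forall i j, (i < n)%nat -> (j < n)%nat -> X i j = Y i j) ->
  forall i, (i < n)%nat -> Mapply n X x i = Mapply n Y x i.
Proof. intros H i Hi. unfold Mapply. apply Csum_ext; intros. rewrite H; auto. Qed.

Lemma opnorm_le_ext n X Y d : (forall i j, (i < n)%nat -> (j < n)%nat -> X i j = Y i j) -> opnorm_le n X d -> opnorm_le n Y d.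
Proof. intros H [Hd Hb]; split; auto. intros x. rewrite sqnorm_ext with (y := Mapply n X x).
  apply Hb. intros; symmetry; apply Mapply_ext; auto. Qed.

Lemma opnorm_le_mono n X d d' : d <= d' -> opnorm_le n X d -> opnorm_le n X d'.
Proof. intros Hle [Hd Hb]; split; [lra|]. intros x. eapply Rle_trans; [apply Hb|].
  apply Rmult_le_compat_r. apply sqnorm_nonneg. apply pow_incr; lra. Qed.

Lemma opnorm_le_add n X Y d1 d2 : opnorm_le n X d1 -> opnorm_le n Y d2 -> opnorm_le n (Madd X Y) (d1 + d2).
Proof. intros [H1 B1] [H2 B2]; split; [lra|]. intros x.
  set (a := Mapply n X x). set (b := Mapply n Y x).
  assert (E : sqnorm n (Mapply n (Madd X Y) x) = sqnorm n a + sqnorm n b + 2 * rdot n a b).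
  { unfold sqnorm, rdot. rewrite <- Rsum_scal, <- !Rsum_plus. apply Rsum_ext; intros.
    unfold a, b, Mapply, Madd.
    rewrite Csum_ext with (h := fun l => Cadd (Cmul (X i l) (x l)) (Cmul (Y i l) (x l))).
    rewrite Csum_add. unfold Cnorm2, Cdot, Cadd; simpl; ring. intros; Cx_ring. }
  rewrite E. pose proof (rdot_sq_le n a b). pose proof (B1 x). pose proof (B2 x).
  fold a in H0; fold b in H3. pose proof (sqnorm_nonneg n x). pose proof (sqnorm_nonneg n a). pose proof (sqnorm_nonneg n b).
  assert (rdot n a b <= d1 * d2 * sqnorm n x).
  { assert ((rdot n a b)^2 <= (d1 * d2 * sqnorm n x)^2).
    { eapply Rle_trans; [exact H|]. replace ((d1*d2*sqnorm n x)^2) with ((d1^2 * sqnorm n x) * (d2^2 * sqnorm n x)) by ring.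
      apply Rmult_le_compat; auto. }
    assert (0 <= d1 * d2 * sqnorm n x) by (apply Rmult_le_pos; [apply Rmult_le_pos|]; lra).
    nra. }
  nra.
Qed.

Lemma opnorm_le_scal n X c d : opnorm_le n X d -> opnorm_le n (Mscal c X) (Rabs c * d).
Proof. intros [Hd B]; split. apply Rmult_le_pos; [apply Rabs_pos|lra]. intros x.
  assert (E : sqnorm n (Mapply n (Mscal c X) x) = c^2 * sqnorm n (Mapply n X x)).
  { unfold sqnorm. rewrite <- Rsum_scal. apply Rsum_ext; intros. unfold Mapply, Mscal.
    rewrite Csum_ext with (h := fun l => Cscal c (Cmul (X i l) (x l))).
    rewrite Csum_scal. unfold Cnorm2, Cscal; simpl; ring. intros; Cx_ring. }
  rewrite E. replace ((Rabs c * d)^2) with (c^2 * d^2). rewrite Rmult_assoc. apply Rmult_le_compat_l.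
  nra. apply B. rewrite Rpow_mult_distr. rewrite pow2_abs. auto. Qed.

Lemma opnorm_le_sub n X Y d1 d2 : opnorm_le n X d1 -> opnorm_le n Y d2 -> opnorm_le n (Msub X Y) (d1 + d2).
Proof. intros H1 H2. apply opnorm_le_ext with (X := Madd X (Mscal (-1) Y)).
  intros; Cx_ring.
  replace d2 with (Rabs (-1) * d2). apply opnorm_le_add; auto. apply opnorm_le_scal; auto.
  rewrite Rabs_left by lra; ring. Qed.

Lemma Mapply_mul n X Y x i : Mapply n (Mmul n X Y) x i = Mapply n X (Mapply n Y x) i.
Proof. unfold Mapply, Mmul.
  rewrite Csum_ext with (h := fun l => Csum (fun m => Cmul (X i m) (Cmul (Y m l) (x l))) n).
  rewrite Csum_swap. apply Csum_ext; intros. rewrite Cmul_Csum_l. auto.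
  intros. rewrite Cmul_Csum_r. apply Csum_ext; intros; Cx_ring. Qed.

Lemma opnorm_le_mul n X Y d1 d2 : opnorm_le n X d1 -> opnorm_le n Y d2 -> opnorm_le n (Mmul n X Y) (d1 * d2).
Proof. intros [H1 B1] [H2 B2]; split. nra. intros x.
  rewrite sqnorm_ext with (y := Mapply n X (Mapply n Y x)) by (intros; apply Mapply_mul).
  eapply Rle_trans. apply B1. replace ((d1*d2)^2) with (d1^2 * d2^2) by ring. rewrite Rmult_assoc.
  apply Rmult_le_compat_l. nra. apply B2. Qed.

Lemma Mapply_id n x i : (i < n)%nat -> Mapply n Mid x i = x i.
Proof. intros H. unfold Mapply, Mid. rewrite <- (Csum_single x i n H). apply Csum_ext; intros l Hl.
  rewrite Nat.eqb_sym. destruct (Nat.eqb l i) eqn:E. apply Nat.eqb_eq in E; subst.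
  Cx_ring. Cx_ring. Qed.

Lemma opnorm_le_id n : opnorm_le n Mid 1.
Proof. split; [lra|]. intros x. rewrite sqnorm_ext with (y := x) by (intros; apply Mapply_id; auto). lra. Qed.

Lemma opnorm_le_zero n : opnorm_le n M0 0.
Proof. split; [lra|]. intros x. unfold sqnorm, Mapply, M0.
  rewrite Rsum_ext with (h := fun _ => 0). rewrite Rsum_zero. lra.
  intros. rewrite Csum_ext with (h := fun _ => C0). rewrite Csum_zero. unfold Cnorm2, C0; simpl; ring.
  intros; Cx_ring. Qed.

Lemma opnorm_le_pow n X d p : opnorm_le n X d -> opnorm_le n (Mpow n X p) (d ^ p).
Proof. intros H. induction p; simpl. apply opnorm_le_id. apply opnorm_le_mul; auto. Qed.

Lemma opnorm_le_frobenius n X d : 0 <= d -> Rsum (fun i => Rsum (fun j => Cnorm2 (X i j)) n) n <= d^2 -> opnorm_le n X d.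
Proof. intros Hd H; split; auto. intros x. unfold sqnorm at 1.
  eapply Rle_trans. apply Rsum_le with (h := fun i => sqnorm n x * sqnorm n (X i)).
  intros. unfold Mapply. rewrite Rmult_comm. apply (Cnorm2_Csum_mul_le n (X i) x).
  rewrite Rsum_scal. rewrite (Rmult_comm (sqnorm n x)). apply Rmult_le_compat_r; auto. apply sqnorm_nonneg. Qed.

Lemma opnorm_le_entry n X d i j : opnorm_le n X d -> (i < n)%nat -> (j < n)%nat -> Cnorm2 (X i j) <= d^2.
Proof. intros [Hd B] Hi Hj. set (e := fun l => if Nat.eqb l j then RtoC 1 else C0).
  specialize (B e). assert (Ee : sqnorm n e = 1).
  { unfold sqnorm. rewrite Rsum_ext with (h := fun l => if Nat.eqb l j then 1 else 0).
    apply (Rsum_single (fun _ => 1)); auto. intros; unfold e; destruct Nat.eqb; unfold Cnorm2, RtoC, C0; simpl; ring. }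
  assert (Ea : Mapply n X e i = X i j).
  { unfold Mapply. rewrite <- (Csum_single (fun l => X i l) j n Hj). apply Csum_ext; intros.
    unfold e; destruct Nat.eqb; Cx_ring. }
  rewrite Ee in B. rewrite <- Ea. eapply Rle_trans; [|rewrite <- (Rmult_1_r (d^2)); exact B].
  unfold sqnorm. apply (Rsum_le_term (fun i0 => Cnorm2 (Mapply n X e i0))); auto. intros; apply Cnorm2_nonneg. Qed.

Lemma spec_norm_le_of_opnorm_le n X d : opnorm_le n X d -> spec_norm_le n X d.
Proof. intros [Hd B] x. unfold vnorm. fold (sqnorm n (Mapply n X x)). fold (sqnorm n x).
  rewrite <- (sqrt_pow2 d Hd). rewrite <- sqrt_mult. apply sqrt_le_1_alt. apply B.
  apply pow2_ge_0. apply sqnorm_nonneg. Qed.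

Lemma rank_le_mono n X r r' : (r <= r')%nat -> rank_le n X r -> rank_le n X r'.
Proof. intros Hle [u [w Hr]]. exists (fun l i => if Nat.ltb l r then u l i else C0), w. intros i j Hi Hj.
  rewrite Hr by auto. replace r' with (r + (r' - r))%nat by lia. rewrite Csum_split.
  rewrite (Csum_ext _ (fun _ => C0) (r' - r)). rewrite Csum_zero.
  apply Cx_ext; simpl; rewrite ?Csum_fst, ?Csum_snd; [rewrite Rplus_0_r|rewrite Rplus_0_r]; apply Rsum_ext; intros l Hl;
   destruct (Nat.ltb_spec l r); try lia; auto.
  intros l Hl. destruct (Nat.ltb_spec (r + l) r); try lia. Cx_ring. Qed.

Lemma rank_le_M0 n : rank_le n M0 0.
Proof. exists (fun _ _ => C0), (fun _ _ => C0). intros. reflexivity. Qed.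

Lemma rank_le_add n X Y r1 r2 : rank_le n X r1 -> rank_le n Y r2 -> rank_le n (Madd X Y) (r1 + r2).
Proof. intros [u1 [w1 H1]] [u2 [w2 H2]].
  exists (fun l => if Nat.ltb l r1 then u1 l else u2 (l - r1)%nat),
         (fun l => if Nat.ltb l r1 then w1 l else w2 (l - r1)%nat).
  intros i j Hi Hj. unfold Madd. rewrite H1, H2 by auto. rewrite Csum_split. f_equal.
  apply Csum_ext; intros l Hl; destruct (Nat.ltb_spec l r1); try lia; auto.
  apply Csum_ext; intros l Hl; destruct (Nat.ltb_spec (r1 + l) r1); try lia.
  replace (r1 + l - r1)%nat with l by lia. auto. Qed.

Lemma rank_le_scal n X c r : rank_le n X r -> rank_le n (Mscal c X) r.
Proof. intros [u [w H]]. exists u, (fun l j => Cscal c (w l j)). intros. unfold Mscal. rewrite H by auto.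
  rewrite <- Csum_scal. apply Csum_ext; intros; Cx_ring. Qed.

Lemma rank_le_mul_l n X Y r : rank_le n X r -> rank_le n (Mmul n Y X) r.
Proof. intros [u [w H]]. exists (fun s i => Csum (fun l => Cmul (Y i l) (u s l)) n), w.
  intros i j Hi Hj. unfold Mmul.
  rewrite Csum_ext with (h := fun l => Csum (fun s => Cmul (w s j) (Cmul (Y i l) (u s l))) r).
  rewrite Csum_swap. apply Csum_ext; intros. rewrite Cmul_Csum_l. auto.
  intros l Hl. rewrite H by auto. rewrite Cmul_Csum_l. apply Csum_ext; intros; Cx_ring. Qed.

Lemma rank_le_mul_r n X Y r : rank_le n X r -> rank_le n (Mmul n X Y) r.
Proof. intros [u [w H]]. exists u, (fun s j => Csum (fun l => Cmul (w s l) (Y l j)) n).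
  intros i j Hi Hj. unfold Mmul.
  rewrite Csum_ext with (h := fun l => Csum (fun s => Cmul (Cmul (w s l) (Y l j)) (u s i)) r).
  rewrite Csum_swap. apply Csum_ext; intros. rewrite Cmul_Csum_r. auto.
  intros l Hl. rewrite H by auto. rewrite Cmul_Csum_r. apply Csum_ext; intros; Cx_ring. Qed.

Lemma rank_le_border_rows n X a b : (a + b <= n)%nat ->
  (forall i j, (i < n)%nat -> (j < n)%nat -> (a <= i)%nat -> (i < n - b)%nat -> X i j = C0) ->
  rank_le n X (a + b).
Proof. intros Hab H0.
  exists (fun l i => if Nat.ltb l a then (if Nat.eqb i l then RtoC 1 else C0)
                     else (if Nat.eqb i (n - b + (l - a))%nat then RtoC 1 else C0)),
         (fun l j => if Nat.ltb l a then X l j else X (n - b + (l - a))%nat j).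
  intros i j Hi Hj. rewrite Csum_split.
  assert (E1 : Csum (fun l => Cmul (if Nat.ltb l a then X l j else X (n - b + (l - a))%nat j)
     (if Nat.ltb l a then (if Nat.eqb i l then RtoC 1 else C0) else (if Nat.eqb i (n - b + (l - a))%nat then RtoC 1 else C0))) a
     = Csum (fun l => if Nat.eqb l i then X l j else C0) a).
  { apply Csum_ext; intros l Hl. destruct (Nat.ltb_spec l a); try lia. rewrite Nat.eqb_sym.
    destruct (Nat.eqb l i); Cx_ring. }
  assert (E2 : Csum (fun l => Cmul (if Nat.ltb (a + l) a then X (a + l)%nat j else X (n - b + (a + l - a))%nat j)
     (if Nat.ltb (a + l) a then (if Nat.eqb i (a + l) then RtoC 1 else C0) else (if Nat.eqb i (n - b + (a + l - a))%nat then RtoC 1 else C0))) b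
     = Csum (fun l => if Nat.eqb l (i - (n - b))%nat then (if Nat.leb (n - b) i then X (n - b + l)%nat j else C0) else C0) b).
  { apply Csum_ext; intros l Hl. destruct (Nat.ltb_spec (a + l) a); try lia. replace (a + l - a)%nat with l by lia.
    destruct (Nat.eqb_spec i (n - b + l)); destruct (Nat.eqb_spec l (i - (n - b))); destruct (Nat.leb_spec (n - b) i); try lia.
    subst. Cx_ring.
    all: Cx_ring. }
  rewrite E1, E2.
  destruct (Nat.ltb_spec i a).
  - rewrite Csum_single by auto. rewrite Csum_ext with (h := fun _ => C0). rewrite Csum_zero.
    Cx_ring.
    intros l Hl. destruct (Nat.leb_spec (n - b) i); try lia. destruct Nat.eqb; auto.
  - rewrite Csum_ext with (g := fun l => if Nat.eqb l i then X l j else C0) (h := fun _ => C0).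
    2: { intros l Hl. destruct (Nat.eqb_spec l i); try lia; auto. }
    rewrite Csum_zero. destruct (Nat.ltb_spec i (n - b)).
    + rewrite H0 by lia. rewrite Csum_ext with (h := fun _ => C0). rewrite Csum_zero.
      Cx_ring.
      intros l Hl. destruct (Nat.leb_spec (n - b) i); try lia. destruct Nat.eqb; auto.
    + rewrite Csum_ext with (h := fun l => if Nat.eqb l (i - (n - b))%nat then X (n - b + l)%nat j else C0).
      rewrite (Csum_single (fun l => X (n - b + l)%nat j)) by lia. replace (n - b + (i - (n - b)))%nat with i by lia.
      Cx_ring.
      intros l Hl. destruct (Nat.leb_spec (n - b) i); try lia. auto.
Qed.

(** * Sine of a perturbed matrix *)

Lemma Mmul_sub_r n X Y Z i j : Mmul n X (Msub Y Z) i j = Csub (Mmul n X Y i j) (Mmul n X Z i j).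
Proof. unfold Mmul, Msub. rewrite <- Csum_sub. apply Csum_ext; intros; Cx_ring. Qed.
Lemma Mmul_sub_l n X Y Z i j : Mmul n (Msub X Y) Z i j = Csub (Mmul n X Z i j) (Mmul n Y Z i j).
Proof. unfold Mmul, Msub. rewrite <- Csum_sub. apply Csum_ext; intros; Cx_ring. Qed.

Section Pow.
Variables (n : nat) (C A R0 : Mat).

(* The rank grows by [rank R0] at each power, and smallness of [C - A - R0]
   propagates through [C^(p+1) - A^(p+1) = C (C^p - A^p) + (C - A) A^p]. *)
Fixpoint pow_lowrank (p : nat) : Mat :=
  match p with
  | O => M0
  | S q => Madd (Mmul n C (pow_lowrank q)) (Mmul n R0 (Mpow n A q))
  end.

Lemma pow_lowrank_rank r : rank_le n R0 r -> forall p, rank_le n (pow_lowrank p) (p * r).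
Proof. intros H p; induction p; simpl. apply rank_le_M0.
  replace (r + p * r)%nat with (p * r + r)%nat by lia. apply rank_le_add. apply rank_le_mul_l; auto. apply rank_le_mul_r; auto. Qed.

Lemma pow_lowrank_opnorm Kb e : 1 <= Kb -> opnorm_le n C Kb -> opnorm_le n A Kb -> opnorm_le n (Msub (Msub C A) R0) e ->
  forall p, opnorm_le n (Msub (Msub (Mpow n C p) (Mpow n A p)) (pow_lowrank p)) (INR p * Kb ^ p * e).
Proof. intros HK HC HA HE p. assert (He : 0 <= e) by apply HE. induction p.
  - simpl. eapply opnorm_le_ext; [|apply (opnorm_le_mono n M0 0); [lra|apply opnorm_le_zero]].
    intros; Cx_ring.
  - eapply opnorm_le_ext with (X := Madd (Mmul n C (Msub (Msub (Mpow n C p) (Mpow n A p)) (pow_lowrank p)))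
                                 (Mmul n (Msub (Msub C A) R0) (Mpow n A p))).
    { intros i j Hi Hj. simpl Mpow; simpl pow_lowrank. unfold Madd. rewrite !Mmul_sub_r, !Mmul_sub_l.
      unfold Msub. Cx_ring. }
    eapply opnorm_le_mono; [|apply opnorm_le_add; [apply opnorm_le_mul; [apply HC|apply IHp] | apply opnorm_le_mul; [apply HE|apply opnorm_le_pow; apply HA]]].
    rewrite S_INR. simpl. assert (0 <= INR p) by apply pos_INR. assert (1 <= Kb ^ p) by (apply pow_R1_Rle; lra).
    assert (Kb^p <= Kb * Kb^p) by nra. nra.
Qed.
End Pow.

Definition sin_coef (k : nat) : R := (-1) ^ k / INR (fact (2 * k + 1)).
Lemma sin_coef_abs_le1 k : Rabs (sin_coef k) <= 1.
Proof. unfold sin_coef, Rdiv. rewrite Rabs_mult, pow_1_abs, Rmult_1_l. rewrite Rabs_inv.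
  pose proof (INR_fact_lt_0 (2*k+1)). rewrite Rabs_pos_eq by lra.
  assert (1 <= INR (fact (2*k+1))). { apply (le_INR 1). apply lt_O_fact. }
  rewrite <- Rinv_1. apply Rinv_le_contravar; lra. Qed.

Lemma sin_partial_S n X k : sin_partial n X (S k) = Madd (sin_partial n X k) (Mscal (sin_coef k) (Mpow n X (2 * k + 1))).
Proof. reflexivity. Qed.

Section SinDec.
Variables (n : nat) (C A R0 : Mat).
Fixpoint sin_lowrank (m : nat) : Mat :=
  match m with
  | O => M0
  | S k => Madd (sin_lowrank k) (Mscal (sin_coef k) (pow_lowrank n C A R0 (2 * k + 1)))
  end.

Lemma sin_lowrank_rank r : rank_le n R0 r -> forall m, rank_le n (sin_lowrank m) (m * m * r).
Proof. intros H m. induction m; simpl. apply rank_le_M0.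
  apply rank_le_mono with (r := (m * m * r + (2 * m + 1) * r)%nat). nia.
  apply rank_le_add; auto. apply rank_le_scal. apply pow_lowrank_rank; auto. Qed.

Lemma sin_lowrank_opnorm Kb e : 1 <= Kb -> opnorm_le n C Kb -> opnorm_le n A Kb -> opnorm_le n (Msub (Msub C A) R0) e ->
  forall m, opnorm_le n (Msub (Msub (sin_partial n C m) (sin_partial n A m)) (sin_lowrank m)) (INR m * INR (2 * m) * Kb ^ (2 * m) * e).
Proof. intros HK HC HA HE m. assert (He : 0 <= e) by apply HE. induction m.
  - simpl. eapply opnorm_le_ext; [|apply (opnorm_le_mono n M0 0); [lra|apply opnorm_le_zero]].
    intros; Cx_ring.
  - eapply opnorm_le_ext with (X := Madd (Msub (Msub (sin_partial n C m) (sin_partial n A m)) (sin_lowrank m))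
       (Mscal (sin_coef m) (Msub (Msub (Mpow n C (2*m+1)) (Mpow n A (2*m+1))) (pow_lowrank n C A R0 (2*m+1))))).
    { intros i j Hi Hj. rewrite !sin_partial_S. cbn [sin_lowrank]. unfold Madd, Msub, Mscal. Cx_ring. }
    eapply opnorm_le_mono; [|apply opnorm_le_add; [apply IHm|apply opnorm_le_scal; apply (pow_lowrank_opnorm n C A R0 Kb e); auto]].
    pose proof (sin_coef_abs_le1 m). assert (0 <= Rabs (sin_coef m)) by apply Rabs_pos.
    assert (H1 : 1 <= Kb ^ (2*m)) by (apply pow_R1_Rle; lra).
    replace (2 * S m)%nat with (S (S (2 * m))) by lia. replace (2*m+1)%nat with (S (2*m)) by lia.
    rewrite !S_INR, !mult_INR. rewrite <- !tech_pow_Rmult. replace (INR 2) with 2 by (simpl; ring).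
    remember (Kb ^ (2*m)) as P. assert (0 <= INR m) by apply pos_INR.
    assert (P <= Kb * P) by nra. assert (Kb * P <= Kb * (Kb * P)) by nra.
    assert (0 <= Rabs (sin_coef m) * ((2 * INR m + 1) * (Kb * P) * e) <= (2 * INR m + 1) * (Kb * P) * e).
    { split. repeat apply Rmult_le_pos; nra. assert (0 <= (2 * INR m + 1) * (Kb * P) * e) by (repeat apply Rmult_le_pos; nra). nra. }
    assert (INR m * (2 * INR m) * P * e <= INR m * (2 * INR m) * (Kb * (Kb * P)) * e).
    { apply Rmult_le_compat_r; auto. apply Rmult_le_compat_l; nra. }
    assert ((2 * INR m + 1) * (Kb * P) * e <= (2 * INR m + 2) * (Kb * (Kb * P)) * e).
    { apply Rmult_le_compat_r; auto. apply Rmult_le_compat; nra. }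
    nra.
Qed.
End SinDec.

Definition sin_major (Kb : R) (k : nat) : R := Kb ^ (2 * k + 1) / INR (fact (2 * k + 1)).

Lemma sin_major_nonneg Kb k : 0 <= Kb -> 0 <= sin_major Kb k.
Proof. intros. unfold sin_major. apply Rmult_le_pos. apply pow_le; auto. left; apply Rinv_0_lt_compat, INR_fact_lt_0. Qed.

Lemma sin_major_succ_le Kb k : 0 <= Kb -> Kb ^ 2 <= INR k + 1 -> sin_major Kb (S k) <= sin_major Kb k / 2.
Proof. intros H0 H. unfold sin_major. replace (2 * S k + 1)%nat with (S (S (2 * k + 1))) by lia.
  rewrite !fact_simpl. rewrite !mult_INR. rewrite <- !tech_pow_Rmult.
  assert (HF : 0 < INR (fact (2*k+1))) by apply INR_fact_lt_0.
  assert (HP : 0 <= Kb ^ (2*k+1)) by (apply pow_le; auto).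
  assert (Ha : INR (S (S (2*k+1))) = 2 * INR k + 3) by (rewrite !S_INR, plus_INR, mult_INR; simpl; ring).
  assert (Hb : INR (S (2*k+1)) = 2 * INR k + 2) by (rewrite !S_INR, plus_INR, mult_INR; simpl; ring).
  rewrite Ha, Hb. assert (0 <= INR k) by apply pos_INR.
  set (Q := Kb ^ (2*k+1) / INR (fact (2*k+1))).
  assert (HQ : 0 <= Q) by (unfold Q; apply Rmult_le_pos; auto; left; apply Rinv_0_lt_compat; auto).
  replace (Kb * (Kb * Kb ^ (2 * k + 1)) / ((2 * INR k + 3) * ((2 * INR k + 2) * INR (fact (2 * k + 1)))))
    with ((Kb * Kb) * Q / ((2 * INR k + 3) * (2 * INR k + 2))) by (unfold Q; field; lra).
  apply Rmult_le_reg_r with ((2 * INR k + 3) * (2 * INR k + 2)). nra.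
  unfold Rdiv. rewrite Rmult_assoc, Rinv_l by nra. simpl in H. nra.
Qed.

Lemma sin_major_tail_le Kb N : 0 <= Kb -> Kb ^ 2 <= INR N + 1 ->
  forall d, Rsum (fun i => sin_major Kb (N + i)) d <= 2 * sin_major Kb N - 2 * sin_major Kb (N + d).
Proof. intros H0 H d. induction d; simpl. rewrite Nat.add_0_r; lra.
  replace (N + S d)%nat with (S (N + d)) by lia.
  assert (sin_major Kb (S (N + d)) <= sin_major Kb (N + d) / 2).
  { apply sin_major_succ_le; auto. rewrite plus_INR. assert (0 <= INR d) by apply pos_INR. lra. }
  lra. Qed.

Lemma sin_major_cv0 Kb : Un_cv (sin_major Kb) 0.
Proof. intros eps He. destruct (cv_speed_pow_fact Kb eps He) as [N HN]. exists N. intros k Hk.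
  apply (HN (2 * k + 1)%nat). lia. Qed.

Lemma opnorm_le_sin_partial_tail n X Kb N d : 0 <= Kb -> opnorm_le n X Kb ->
  opnorm_le n (Msub (sin_partial n X (N + d)) (sin_partial n X N)) (Rsum (fun i => sin_major Kb (N + i)) d).
Proof. intros HK HX. induction d.
  - simpl. rewrite Nat.add_0_r. eapply opnorm_le_ext; [|apply opnorm_le_zero]. intros; Cx_ring.
  - replace (N + S d)%nat with (S (N + d)) by lia. simpl Rsum.
    eapply opnorm_le_ext with (X := Madd (Msub (sin_partial n X (N + d)) (sin_partial n X N)) (Mscal (sin_coef (N + d)) (Mpow n X (2 * (N + d) + 1)))).
    { intros. rewrite sin_partial_S. unfold Madd, Msub. Cx_ring. }
    eapply opnorm_le_mono; [|apply opnorm_le_add; [apply IHd|apply opnorm_le_scal; apply opnorm_le_pow; apply HX]].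
    unfold sin_major. unfold sin_coef. unfold Rdiv. rewrite Rabs_mult, pow_1_abs, Rmult_1_l.
    rewrite Rabs_inv, Rabs_pos_eq by (left; apply INR_fact_lt_0). lra.
Qed.

Lemma Un_cv_const c : Un_cv (fun _ => c) c.
Proof. intros e He; exists O; intros; unfold Rdist; rewrite Rminus_diag, Rabs_R0; lra. Qed.

Lemma Rsum_cv (g : nat -> nat -> R) (l : nat -> R) n :
  (forall i, (i < n)%nat -> Un_cv (fun N => g N i) (l i)) -> Un_cv (fun N => Rsum (g N) n) (Rsum l n).
Proof. induction n; intros H; simpl. intros eps He; exists O; intros; unfold Rdist; rewrite Rminus_0_r, Rabs_R0; lra.
  apply CV_plus. apply IHn; intros; apply H; lia. apply H; lia. Qed.

Lemma Un_cv_le_eventually u l c N0 : Un_cv u l -> (forall N, (N >= N0)%nat -> u N <= c) -> l <= c.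
Proof. intros Hu Hc. destruct (Rle_dec l c); auto. exfalso.
  destruct (Hu (l - c)) as [N HN]. lra. specialize (HN (max N N0) ltac:(lia)). specialize (Hc (max N N0) ltac:(lia)).
  unfold Rdist in HN. apply Rabs_def2 in HN. lra. Qed.

Lemma opnorm_le_limit n (Y : nat -> Mat) (Z : Mat) d N0 :
  (forall i j, (i < n)%nat -> (j < n)%nat -> Cseq_cv (fun N => Y N i j) (Z i j)) ->
  (forall N, (N >= N0)%nat -> opnorm_le n (Y N) d) -> opnorm_le n Z d.
Proof. intros Hcv Hb. split. apply (Hb N0); lia. intros x.
  apply (Un_cv_le_eventually (fun N => sqnorm n (Mapply n (Y N) x)) _ _ N0).
  - unfold sqnorm. apply Rsum_cv. intros i Hi. unfold Cnorm2.
    assert (Hf : Un_cv (fun N => fst (Mapply n (Y N) x i)) (fst (Mapply n Z x i))).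
    { unfold Mapply. rewrite Csum_fst. eapply Un_cv_ext. intros; symmetry; apply Csum_fst.
      apply Rsum_cv. intros l Hl. simpl. apply CV_minus; apply CV_mult; try apply Hcv; auto using Un_cv_const. }
    assert (Hs : Un_cv (fun N => snd (Mapply n (Y N) x i)) (snd (Mapply n Z x i))).
    { unfold Mapply. rewrite Csum_snd. eapply Un_cv_ext. intros; symmetry; apply Csum_snd.
      apply Rsum_cv. intros l Hl. simpl. apply CV_plus; apply CV_mult; try apply Hcv; auto using Un_cv_const. }
    apply CV_plus; apply CV_mult; auto.
  - intros N HN. apply (Hb N HN).
Qed.

Lemma nat_upper_bound (x : R) : exists N : nat, x <= INR N.
Proof. destruct (archimed x) as [H1 H2].
  destruct (Z_le_gt_dec (up x) 0) as [Hz|Hz].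
  - exists O; simpl. assert (IZR (up x) <= 0) by (apply IZR_le; auto). lra.
  - exists (Z.to_nat (up x)). rewrite INR_IZR_INZ, Z2Nat.id by lia. lra. Qed.

Lemma sin_partial_cauchy n X Kb i j (F : Cx -> R) : 0 <= Kb -> opnorm_le n X Kb -> (i < n)%nat -> (j < n)%nat ->
  (forall z, Rabs (F z) <= sqrt (Cnorm2 z)) -> (forall z w, F (Csub z w) = F z - F w) ->
  Cauchy_crit (fun N => F (sin_partial n X N i j)).
Proof. intros HK HX Hi Hj HF HFl eps He.
  destruct (nat_upper_bound (Kb ^ 2)) as [N0 HN0].
  destruct (sin_major_cv0 Kb (eps / 4) ltac:(lra)) as [N1 HN1].
  assert (key : forall a b, (a >= max N0 N1)%nat -> (b >= a)%nat -> Rabs (F (sin_partial n X b i j) - F (sin_partial n X a i j)) < eps).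
  { intros a b Ha Hb.
    pose proof (opnorm_le_entry n _ _ i j (opnorm_le_sin_partial_tail n X Kb a (b - a) HK HX) Hi Hj) as Hent.
    replace (a + (b - a))%nat with b in Hent by lia.
    assert (HaN : Kb ^ 2 <= INR a + 1) by (assert (INR N0 <= INR a) by (apply le_INR; lia); lra).
    pose proof (sin_major_tail_le Kb a HK HaN (b - a)) as Hg.
    pose proof (sin_major_nonneg Kb (a + (b - a)) HK).
    assert (Hsa : sin_major Kb a < eps / 4).
    { specialize (HN1 a ltac:(lia)). unfold Rdist in HN1. rewrite Rminus_0_r in HN1. apply Rabs_def2 in HN1. lra. }
    set (T := Rsum (fun i0 => sin_major Kb (a + i0)) (b - a)) in *.
    assert (0 <= T) by (apply Rsum_nonneg; intros; apply sin_major_nonneg; auto).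
    rewrite <- HFl. eapply Rle_lt_trans; [apply HF|].
    apply Rle_lt_trans with T; [ rewrite <- (sqrt_pow2 T) by auto; apply sqrt_le_1_alt; apply Hent | lra ]. }
  exists (max N0 N1). intros a b Ha Hb. unfold Rdist. destruct (Nat.le_ge_cases a b).
  - rewrite Rabs_minus_sym; apply key; lia.
  - apply key; lia.
Qed.

Lemma sin_partial_cv n X Kb : 0 <= Kb -> opnorm_le n X Kb -> forall i j, (i < n)%nat -> (j < n)%nat ->
  Cseq_cv (fun N => sin_partial n X N i j) (Msin n X i j).
Proof. intros HK HX i j Hi Hj. unfold Msin.
  apply (epsilon_spec (inhabits C0) (fun z => Cseq_cv (fun N => sin_partial n X N i j) z)).
  assert (Hfst : forall z, Rabs (fst z) <= sqrt (Cnorm2 z)).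
  { intros z. unfold Cnorm2. rewrite <- sqrt_Rsqr_abs. apply sqrt_le_1_alt. unfold Rsqr. nra. }
  assert (Hsnd : forall z, Rabs (snd z) <= sqrt (Cnorm2 z)).
  { intros z. unfold Cnorm2. rewrite <- sqrt_Rsqr_abs. apply sqrt_le_1_alt. unfold Rsqr. nra. }
  destruct (Rcomplete.R_complete _ (sin_partial_cauchy n X Kb i j fst HK HX Hi Hj Hfst (fun _ _ => eq_refl))) as [l1 H1].
  destruct (Rcomplete.R_complete _ (sin_partial_cauchy n X Kb i j snd HK HX Hi Hj Hsnd (fun _ _ => eq_refl))) as [l2 H2].
  exists (l1, l2); split; auto.
Qed.

Lemma sin_diff_decomp n C A R0 r Kb e m eps : 1 <= Kb -> opnorm_le n C Kb -> opnorm_le n A Kb -> rank_le n R0 r ->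
  opnorm_le n (Msub (Msub C A) R0) e -> Kb ^ 2 <= INR m + 1 ->
  4 * sin_major Kb m + INR m * INR (2 * m) * Kb ^ (2 * m) * e <= eps ->
  exists Rn En : Mat,
    (forall i j, (i < n)%nat -> (j < n)%nat -> Msub (Msin n C) (Msin n A) i j = Madd Rn En i j) /\
    rank_le n Rn (m * m * r) /\ spec_norm_le n En eps.
Proof. intros HK HC HA Hr HE Hm Heps.
  exists (sin_lowrank n C A R0 m), (Msub (Msub (Msin n C) (Msin n A)) (sin_lowrank n C A R0 m)). split; [|split].
  - intros; unfold Madd, Msub; Cx_ring.
  - apply sin_lowrank_rank; auto.
  - apply spec_norm_le_of_opnorm_le. apply opnorm_le_limit with (N0 := m)
      (Y := fun N => Msub (Msub (sin_partial n C N) (sin_partial n A N)) (sin_lowrank n C A R0 m)).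
    + intros i j Hi Hj. destruct (sin_partial_cv n C Kb ltac:(lra) HC i j Hi Hj) as [c1 c2].
      destruct (sin_partial_cv n A Kb ltac:(lra) HA i j Hi Hj) as [a1 a2]. unfold Msub; simpl. split.
      * apply CV_minus; [apply CV_minus; auto|apply Un_cv_const].
      * apply CV_minus; [apply CV_minus; auto|apply Un_cv_const].
    + intros N HN. replace N with (m + (N - m))%nat by lia.
      eapply opnorm_le_ext with (X := Madd (Msub (Msub (sin_partial n C m) (sin_partial n A m)) (sin_lowrank n C A R0 m))
         (Msub (Msub (sin_partial n C (m + (N - m))) (sin_partial n C m)) (Msub (sin_partial n A (m + (N - m))) (sin_partial n A m)))).
      { intros; unfold Madd, Msub; Cx_ring. }
      eapply opnorm_le_mono; [|apply opnorm_le_add; [apply (sin_lowrank_opnorm n C A R0 Kb e); auto|apply opnorm_le_sub; apply opnorm_le_sin_partial_tail; eauto; lra]].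
      pose proof (sin_major_tail_le Kb m ltac:(lra) Hm (N - m)). pose proof (sin_major_nonneg Kb (m + (N - m)) ltac:(lra)). lra.
Qed.

(** * Integrals over [[-pi, pi]] *)

Definition Rcont (f : R -> R) : Prop := forall x, continuous f x.

Lemma Rcont_plus f g : Rcont f -> Rcont g -> Rcont (fun t => f t + g t).
Proof. intros H1 H2 x. apply (continuous_plus f g x); auto. Qed.
Lemma Rcont_minus f g : Rcont f -> Rcont g -> Rcont (fun t => f t - g t).
Proof. intros H1 H2 x. apply (continuous_minus f g x); auto. Qed.
Lemma Rcont_mult f g : Rcont f -> Rcont g -> Rcont (fun t => f t * g t).
Proof. intros H1 H2 x. apply (continuous_mult f g x); auto. Qed.
Lemma Rcont_opp f : Rcont f -> Rcont (fun t => - f t).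
Proof. intros H x. apply (continuous_opp f x); auto. Qed.
Lemma Rcont_const c : Rcont (fun _ => c).
Proof. intros x. apply continuous_const. Qed.
Lemma Rcont_id : Rcont (fun t => t).
Proof. intros x. apply continuous_id. Qed.
Lemma Rcont_cos f : Rcont f -> Rcont (fun t => cos (f t)).
Proof. intros H x. apply continuous_cos_comp; auto. Qed.
Lemma Rcont_sin f : Rcont f -> Rcont (fun t => sin (f t)).
Proof. intros H x. apply continuous_sin_comp; auto. Qed.
Lemma Rcont_Rmult_c c : Rcont (Rmult c).
Proof. intros x. apply (continuous_mult (fun _ => c) (fun t => t) x). apply continuous_const. apply continuous_id. Qed.
Lemma Rcont_Rsum (F : nat -> R -> R) n : (forall i, (i < n)%nat -> Rcont (F i)) -> Rcont (fun t => Rsum (fun i => F i t) n).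
Proof. induction n; intros H; simpl. apply Rcont_const. apply Rcont_plus. apply IHn; intros; apply H; lia. apply H; lia. Qed.
Lemma Rcont_of_continuity f : continuity f -> Rcont f.
Proof. intros H x. apply continuity_pt_filterlim. apply H. Qed.

Ltac solve_cont := repeat match goal with
  | H : Rcont ?f |- Rcont ?f => exact H
  | |- Rcont (fun _ => ?c) => apply (Rcont_const c)
  | |- Rcont (fun t => t) => apply Rcont_id
  | |- Rcont (Rmult ?c) => apply (Rcont_Rmult_c c)
  | |- Rcont (fun t => @?a t - @?b t) => apply (Rcont_minus a b)
  | |- Rcont (fun t => @?a t + @?b t) => apply (Rcont_plus a b)
  | |- Rcont (fun t => - @?a t) => apply (Rcont_opp a)
  | |- Rcont (fun t => @?a t * @?b t) => apply (Rcont_mult a b)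
  | |- Rcont (fun t => cos (@?a t)) => apply (Rcont_cos a)
  | |- Rcont (fun t => sin (@?a t)) => apply (Rcont_sin a)
  | |- Rcont (fun t => Rsum _ _) => apply Rcont_Rsum; intros
  end.

Definition Ipi (h : R -> R) : R := RInt.RInt h (- PI) PI.

Lemma ex_RInt_Rcont h : Rcont h -> ex_RInt h (- PI) PI.
Proof. intros H. apply (ex_RInt_continuous (V := R_CompleteNormedModule)). intros; apply H. Qed.

Lemma Ipi_plus f g : Rcont f -> Rcont g -> Ipi (fun t => f t + g t) = Ipi f + Ipi g.
Proof. intros H1 H2. unfold Ipi. apply (RInt_plus f g); apply ex_RInt_Rcont; auto. Qed.
Lemma Ipi_minus f g : Rcont f -> Rcont g -> Ipi (fun t => f t - g t) = Ipi f - Ipi g.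
Proof. intros H1 H2. unfold Ipi. apply (RInt_minus f g); apply ex_RInt_Rcont; auto. Qed.
Lemma Ipi_scal c f : Rcont f -> Ipi (fun t => c * f t) = c * Ipi f.
Proof. intros H. unfold Ipi. apply (RInt_scal f); apply ex_RInt_Rcont; auto. Qed.
Lemma Ipi_const c : Ipi (fun _ => c) = 2 * PI * c.
Proof. unfold Ipi. rewrite RInt_const. simpl. unfold scal; simpl; unfold mult; simpl. ring. Qed.
Lemma Ipi_ext f g : (forall t, - PI <= t <= PI -> f t = g t) -> Ipi f = Ipi g.
Proof. intros H. unfold Ipi. apply RInt_ext. intros x Hx. pose proof PI_RGT_0.
  rewrite Rmin_left, Rmax_right in Hx by lra. apply H; lra. Qed.
Lemma Ipi_le f g : Rcont f -> Rcont g -> (forall t, - PI <= t <= PI -> f t <= g t) -> Ipi f <= Ipi g.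
Proof. intros H1 H2 H. unfold Ipi. pose proof PI_RGT_0. apply RInt_le; try lra; try apply ex_RInt_Rcont; auto.
  intros; apply H; lra. Qed.
Lemma Rabs_Ipi_le h b : Rcont h -> Rcont b ->
  (forall t, - PI <= t <= PI -> Rabs (h t) <= b t) -> Rabs (Ipi h) <= Ipi b.
Proof. intros Hh Hb H. apply Rabs_le_between. split.
  - replace (- Ipi b) with (Ipi (fun t => -1 * b t)) by (rewrite Ipi_scal by auto; ring).
    apply Ipi_le; [solve_cont|auto|]. intros t Ht. specialize (H t Ht). apply Rabs_le_between in H. lra.
  - apply Ipi_le; auto. intros t Ht. specialize (H t Ht). apply Rabs_le_between in H. lra.
Qed.
Lemma Ipi_Rsum (F : nat -> R -> R) n : (forall i, (i < n)%nat -> Rcont (F i)) ->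
  Ipi (fun t => Rsum (fun i => F i t) n) = Rsum (fun i => Ipi (F i)) n.
Proof. induction n; intros H; simpl. rewrite Ipi_const; ring.
  rewrite Ipi_plus. rewrite IHn. auto. intros; apply H; lia. apply Rcont_Rsum; intros; apply H; lia. apply H; lia. Qed.

Lemma Ipi_Rsum2 (F : nat -> nat -> R -> R) n m : (forall i j, Rcont (F i j)) ->
  Ipi (fun t => Rsum (fun i => Rsum (fun j => F i j t) m) n) = Rsum (fun i => Rsum (fun j => Ipi (F i j)) m) n.
Proof. intros H. rewrite Ipi_Rsum by (intros; apply Rcont_Rsum; auto).
  apply Rsum_ext; intros. apply Ipi_Rsum; auto. Qed.

Lemma RInt_def_Ipi h : Rcont h -> Defs.RInt h (- PI) PI = Ipi h.
Proof. intros H. unfold Defs.RInt. pose proof (ex_RInt_Rcont h H) as He.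
  pose proof (ex_RInt_Reals_0 _ _ _ He) as pr.
  destruct (epsilon_spec (inhabits 0) (fun I => exists pr : Riemann_integrable h (- PI) PI, RiemannInt pr = I)) as [pr' E].
  exists (RiemannInt pr); eauto. rewrite <- E. unfold Ipi. rewrite (RInt_Reals h _ _ pr'). auto. Qed.

Lemma Ipi_sin_mul q : Ipi (fun t => sin (q * t)) = 0.
Proof. destruct (Req_dec q 0) as [Hq|Hq].
  - subst. rewrite Ipi_ext with (g := fun _ => 0). rewrite Ipi_const; ring. intros; rewrite Rmult_0_l, sin_0; auto.
  - unfold Ipi. apply is_RInt_unique.
    replace 0 with (minus ((fun t => - cos (q * t) / q) PI) ((fun t => - cos (q * t) / q) (- PI))).
    apply (is_RInt_derive (V := R_CompleteNormedModule) (fun t => - cos (q * t) / q)). intros x _. auto_derive; auto. field; auto.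
    intros x _. apply Rcont_sin. solve_cont.
    simpl. unfold minus, plus, opp; simpl. replace (q * - PI) with (- (q * PI)) by ring. rewrite cos_neg. field; auto.
Qed.

Lemma Ipi_cos_int_mul (z : Z) : Ipi (fun t => cos (IZR z * t)) = if Z.eqb z 0 then 2 * PI else 0.
Proof. destruct (Z.eqb_spec z 0) as [Hz|Hz].
  - subst. rewrite Ipi_ext with (g := fun _ => 1). rewrite Ipi_const; ring. intros; rewrite Rmult_0_l, cos_0; auto.
  - assert (Hq : IZR z <> 0) by (apply not_0_IZR; auto). set (q := IZR z).
    unfold Ipi. apply is_RInt_unique.
    replace 0 with (minus ((fun t => sin (q * t) / q) PI) ((fun t => sin (q * t) / q) (- PI))).
    apply (is_RInt_derive (V := R_CompleteNormedModule) (fun t => sin (q * t) / q)). intros x _. auto_derive; auto. field; auto.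
    intros x _. apply Rcont_cos. solve_cont.
    simpl. unfold minus, plus, opp; simpl. replace (q * - PI) with (- (q * PI)) by ring. rewrite sin_neg.
    rewrite sin_eq_0_1 by (exists z; auto). field; auto.
Qed.

Lemma fourier_Ipi g z : Rcont (fun t => fst (g t)) -> Rcont (fun t => snd (g t)) ->
  fourier g z = (/ (2 * PI) * Ipi (fun t => fst (g t) * cos (IZR z * t) + snd (g t) * sin (IZR z * t)),
                 / (2 * PI) * Ipi (fun t => snd (g t) * cos (IZR z * t) - fst (g t) * sin (IZR z * t))).
Proof. intros H1 H2. unfold fourier. cbv beta zeta. rewrite !RInt_def_Ipi. reflexivity. all: solve_cont. Qed.

(** * Toeplitz and optimal circulant matrices *)

Lemma IZR_sub_nat j k : IZR (Z.of_nat j - Z.of_nat k) = INR j - INR k.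
Proof. rewrite minus_IZR, <- !INR_IZR_INZ. auto. Qed.

(* [trig_re x n + i trig_im x n] is the trigonometric polynomial [t |-> sum_(k<n) x_k e^(ikt)]. *)
Definition trig_re (x : nat -> Cx) n t := Rsum (fun k => fst (x k) * cos (INR k * t) - snd (x k) * sin (INR k * t)) n.
Definition trig_im (x : nat -> Cx) n t := Rsum (fun k => fst (x k) * sin (INR k * t) + snd (x k) * cos (INR k * t)) n.

Definition Ccross (a b : Cx) := snd a * fst b - fst a * snd b.

Lemma Rsum_mul_Rsum a b n m : Rsum a n * Rsum b m = Rsum (fun j => Rsum (fun k => a j * b k) m) n.
Proof. rewrite Rmult_comm. rewrite <- Rsum_scal. apply Rsum_ext; intros. rewrite Rmult_comm, <- Rsum_scal. auto. Qed.

Lemma Rsum_comb g1 g2 a b c d n : Rsum (fun k => g1 * (a k + b k) - g2 * (c k - d k)) n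
  = g1 * (Rsum a n + Rsum b n) - g2 * (Rsum c n - Rsum d n).
Proof. induction n; simpl. ring. rewrite IHn. ring. Qed.

Lemma trig_product_expand g1 g2 (y x : nat -> Cx) n t :
  Rsum (fun j => Rsum (fun k =>
     (g1 * cos (IZR (Z.of_nat j - Z.of_nat k) * t) + g2 * sin (IZR (Z.of_nat j - Z.of_nat k) * t)) * Cdot (y j) (x k)
   + (g2 * cos (IZR (Z.of_nat j - Z.of_nat k) * t) - g1 * sin (IZR (Z.of_nat j - Z.of_nat k) * t)) * Ccross (y j) (x k)) n) n
  = g1 * (trig_re y n t * trig_re x n t + trig_im y n t * trig_im x n t) - g2 * (trig_re y n t * trig_im x n t - trig_im y n t * trig_re x n t).
Proof.
  set (yr := fun j => fst (y j) * cos (INR j * t) - snd (y j) * sin (INR j * t)).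
  set (yi := fun j => fst (y j) * sin (INR j * t) + snd (y j) * cos (INR j * t)).
  set (xr := fun j => fst (x j) * cos (INR j * t) - snd (x j) * sin (INR j * t)).
  set (xi := fun j => fst (x j) * sin (INR j * t) + snd (x j) * cos (INR j * t)).
  transitivity (Rsum (fun j => Rsum (fun k => g1 * (yr j * xr k + yi j * xi k) - g2 * (yr j * xi k - yi j * xr k)) n) n).
  - apply Rsum_ext; intros j Hj; apply Rsum_ext; intros k Hk.
    rewrite IZR_sub_nat. rewrite Rmult_minus_distr_r, cos_minus, sin_minus. unfold yr, yi, xr, xi, Cdot, Ccross. ring.
  - rewrite Rsum_ext with (h := fun j => g1 * (Rsum (fun k => yr j * xr k) n + Rsum (fun k => yi j * xi k) n)
        - g2 * (Rsum (fun k => yr j * xi k) n - Rsum (fun k => yi j * xr k) n)) by (intros; apply Rsum_comb).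
    rewrite Rsum_comb. unfold trig_re, trig_im. fold yr yi xr xi. rewrite !Rsum_mul_Rsum. auto.
Qed.

Lemma Rcont_trig_re x n : Rcont (trig_re x n).
Proof. unfold trig_re. apply Rcont_Rsum; intros. solve_cont. Qed.
Lemma Rcont_trig_im x n : Rcont (trig_im x n).
Proof. unfold trig_im. apply Rcont_Rsum; intros. solve_cont. Qed.

Lemma Ipi_trig_sqnorm x n : Ipi (fun t => trig_re x n t * trig_re x n t + trig_im x n t * trig_im x n t) = 2 * PI * sqnorm n x.
Proof.
  rewrite Ipi_ext with (g := fun t => Rsum (fun j => Rsum (fun k =>
     (1 * cos (IZR (Z.of_nat j - Z.of_nat k) * t) + 0 * sin (IZR (Z.of_nat j - Z.of_nat k) * t)) * Cdot (x j) (x k)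
   + (0 * cos (IZR (Z.of_nat j - Z.of_nat k) * t) - 1 * sin (IZR (Z.of_nat j - Z.of_nat k) * t)) * Ccross (x j) (x k)) n) n).
  2: { intros t _. rewrite trig_product_expand. ring. }
  rewrite Ipi_Rsum. 2: { intros. apply Rcont_Rsum. intros. solve_cont. }
  rewrite Rsum_ext with (h := fun j => 2 * PI * Cnorm2 (x j) * (if Nat.eqb j j then 1 else 0)).
  - unfold sqnorm. rewrite <- Rsum_scal. apply Rsum_ext. intros; rewrite Nat.eqb_refl. ring.
  - intros j Hj. rewrite Ipi_Rsum. 2: { intros. solve_cont. }
    rewrite Rsum_ext with (h := fun k => if Nat.eqb k j then 2 * PI * Cnorm2 (x j) else 0).
    rewrite (Rsum_single (fun _ => 2 * PI * Cnorm2 (x j))) by auto. rewrite Nat.eqb_refl; ring.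
    intros k Hk. rewrite Ipi_plus by solve_cont. rewrite Ipi_ext with (g := fun t => Cdot (x j) (x k) * cos (IZR (Z.of_nat j - Z.of_nat k) * t)) by (intros; ring).
    rewrite Ipi_ext with (f := fun t => (0 * cos (IZR (Z.of_nat j - Z.of_nat k) * t) - 1 * sin (IZR (Z.of_nat j - Z.of_nat k) * t)) * Ccross (x j) (x k))
      (g := fun t => (- Ccross (x j) (x k)) * sin (IZR (Z.of_nat j - Z.of_nat k) * t)) by (intros; ring).
    rewrite !Ipi_scal by solve_cont. rewrite Ipi_sin_mul, Ipi_cos_int_mul.
    destruct (Nat.eqb_spec k j); destruct (Z.eqb_spec (Z.of_nat j - Z.of_nat k) 0); try lia.
    subst. unfold Cdot, Cnorm2. ring. ring.
Qed.

Lemma Cdot_Csum a g n : Cdot a (Csum g n) = Rsum (fun k => Cdot a (g k)) n.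
Proof. induction n; simpl. unfold Cdot, C0; simpl; ring. rewrite <- IHn. unfold Cdot, Cadd; simpl; ring. Qed.

(* AM-GM form of [|<y, X x>| <= G |x| |y|]: it is linear in [X], hence stable under averaging. *)
Definition pairing_bound (n : nat) (X : Mat) (G : R) : Prop :=
  forall x y s, 0 < s -> rdot n y (Mapply n X x) <= G * (s * sqnorm n y + sqnorm n x / s) / 2.

Lemma complex_pairing_amgm g1 g2 G s yr yi xr xi : 0 < s -> 0 <= G -> g1 ^ 2 + g2 ^ 2 <= G ^ 2 ->
  g1 * (yr * xr + yi * xi) - g2 * (yr * xi - yi * xr)
  <= G * s / 2 * (yr * yr + yi * yi) + G / s / 2 * (xr * xr + xi * xi).
Proof. intros Hs HG Hg.
  set (w1 := yr * xr + yi * xi). set (w2 := yr * xi - yi * xr).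
  set (U := yr * yr + yi * yi). set (V := xr * xr + xi * xi).
  set (Rr := (s * U + V / s) / 2).
  assert (HU : 0 <= U) by (unfold U; nra). assert (HV : 0 <= V) by (unfold V; nra).
  assert (HR : 0 <= Rr) by (unfold Rr; apply Rmult_le_pos; [apply Rplus_le_le_0_compat; [nra|apply Rmult_le_pos; [lra|left; apply Rinv_0_lt_compat; lra]]|lra]).
  assert (HUV : U * V <= Rr * Rr).
  { unfold Rr. assert (0 <= (s * U - V / s) ^ 2) by apply pow2_ge_0.
    replace (V / s) with (V * / s) in * by auto.
    assert (s * / s = 1) by (field; lra). nra. }
  assert (Hw : w1 * w1 + w2 * w2 = U * V) by (unfold w1, w2, U, V; ring).
  assert (Hsq : (g1 * w1 - g2 * w2) ^ 2 <= (G * Rr) ^ 2).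
  { assert (Hcs : (g1 * w1 - g2 * w2) ^ 2 <= (g1 ^ 2 + g2 ^ 2) * (w1 * w1 + w2 * w2)).
    { assert (0 <= (g1 * w2 + g2 * w1) ^ 2) by apply pow2_ge_0. nra. }
    rewrite Hw in Hcs. eapply Rle_trans; [exact Hcs|]. replace ((G * Rr) ^ 2) with (G ^ 2 * (Rr * Rr)) by ring.
    apply Rmult_le_compat; nra. }
  replace (G * s / 2 * U + G / s / 2 * V) with (G * Rr) by (unfold Rr; field; lra).
  assert (0 <= G * Rr) by nra. nra.
Qed.

Section Toep.
Variable g : R -> Cx.
Hypothesis Hg1 : Rcont (fun t => fst (g t)).
Hypothesis Hg2 : Rcont (fun t => snd (g t)).

Lemma rdot_toeplitz_Ipi n x y : rdot n y (Mapply n (toeplitz g n) x) =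
  / (2 * PI) * Ipi (fun t => fst (g t) * (trig_re y n t * trig_re x n t + trig_im y n t * trig_im x n t)
                            - snd (g t) * (trig_re y n t * trig_im x n t - trig_im y n t * trig_re x n t)).
Proof.
  set (A := fun j k t => fst (g t) * cos (IZR (Z.of_nat j - Z.of_nat k) * t) + snd (g t) * sin (IZR (Z.of_nat j - Z.of_nat k) * t)).
  set (B := fun j k t => snd (g t) * cos (IZR (Z.of_nat j - Z.of_nat k) * t) - fst (g t) * sin (IZR (Z.of_nat j - Z.of_nat k) * t)).
  rewrite Ipi_ext with (g := fun t => Rsum (fun j => Rsum (fun k => A j k t * Cdot (y j) (x k) + B j k t * Ccross (y j) (x k)) n) n).
  2: { intros t _. rewrite <- trig_product_expand. apply Rsum_ext; intros; apply Rsum_ext; intros. unfold A, B. ring. }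
  rewrite Ipi_Rsum. 2: { intros. apply Rcont_Rsum; intros. unfold A, B. solve_cont. }
  unfold rdot. rewrite <- Rsum_scal. apply Rsum_ext; intros j Hj.
  rewrite Ipi_Rsum. 2: { intros. unfold A, B. solve_cont. }
  unfold Mapply. rewrite Cdot_Csum. rewrite <- Rsum_scal.
  apply Rsum_ext; intros k Hk. unfold toeplitz. rewrite fourier_Ipi by auto.
  rewrite (Ipi_plus (fun t => A j k t * Cdot (y j) (x k)) (fun t => B j k t * Ccross (y j) (x k))) by (unfold A, B; solve_cont).
  rewrite Ipi_ext with (f := fun t => A j k t * Cdot (y j) (x k)) (g := fun t => Cdot (y j) (x k) * A j k t) by (intros; ring).
  rewrite Ipi_ext with (f := fun t => B j k t * Ccross (y j) (x k)) (g := fun t => Ccross (y j) (x k) * B j k t) by (intros; ring).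
  rewrite !Ipi_scal by (unfold A, B; solve_cont). unfold A, B, Cdot, Ccross, Cmul; cbv beta; simpl. ring.
Qed.

Lemma toeplitz_pairing_bound G n : 0 <= G ->
  (forall t, - PI <= t <= PI -> fst (g t) ^ 2 + snd (g t) ^ 2 <= G ^ 2) ->
  pairing_bound n (toeplitz g n) G.
Proof. intros HG Hbound x y s Hs. pose proof PI_RGT_0.
  pose proof (Rcont_trig_re x n); pose proof (Rcont_trig_re y n); pose proof (Rcont_trig_im x n); pose proof (Rcont_trig_im y n).
  rewrite rdot_toeplitz_Ipi.
  apply Rmult_le_reg_l with (2 * PI); [lra|]. rewrite <- Rmult_assoc, Rinv_r, Rmult_1_l by lra.
  eapply Rle_trans.
  - apply (Ipi_le _ (fun t => G * s / 2 * (trig_re y n t * trig_re y n t + trig_im y n t * trig_im y n t)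
                       + G / s / 2 * (trig_re x n t * trig_re x n t + trig_im x n t * trig_im x n t))); [solve_cont|solve_cont|].
    intros t Ht. apply complex_pairing_amgm; auto.
  - rewrite Ipi_plus, !Ipi_scal, !Ipi_trig_sqnorm by solve_cont. right. field. lra.
Qed.
End Toep.

Lemma opnorm_le_of_pairing_bound n X G : 0 <= G -> pairing_bound n X G -> opnorm_le n X G.
Proof. intros HG H. split; auto. intros x. set (z := Mapply n X x).
  assert (Ez : rdot n z z = sqnorm n z) by (apply Rsum_ext; intros; unfold Cdot, Cnorm2; ring).
  pose proof (sqnorm_nonneg n z). pose proof (sqnorm_nonneg n x).
  destruct (Req_dec G 0) as [HG0|HG0].
  - specialize (H x z 1 ltac:(lra)). fold z in H. rewrite Ez, HG0 in H. nra.
  - specialize (H x z (/ G) ltac:(apply Rinv_0_lt_compat; lra)). fold z in H. rewrite Ez in H.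
    replace (G * (/ G * sqnorm n z + sqnorm n x / / G) / 2) with ((sqnorm n z + G^2 * sqnorm n x) / 2) in H by (field; lra).
    lra.
Qed.

Lemma mod_small_or_sub a n : (0 < n)%nat -> (a < 2 * n)%nat -> Nat.modulo a n = if Nat.ltb a n then a else (a - n)%nat.
Proof. intros Hn Ha. destruct (Nat.ltb_spec a n). apply Nat.mod_small; auto.
  replace a with ((a - n) + 1 * n)%nat at 1 by lia. rewrite Nat.Div0.mod_add by lia. apply Nat.mod_small; lia. Qed.

Ltac modsimpl := repeat first [ match goal with |- context [Nat.ltb ?a ?b] => destruct (Nat.ltb_spec a b) end
 | match goal with |- context [Nat.modulo ?a ?n] => lazymatch a with context [Nat.modulo _ _] => fail | _ => rewrite (mod_small_or_sub a n) by lia end end ].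

Lemma Rsum_rotate_aux (F : nat -> R) m s : (0 < m + s)%nat ->
  Rsum (fun i => F (Nat.modulo (i + s) (m + s))) (m + s) = Rsum F (m + s).
Proof. intros Hn. rewrite Rsum_split.
  replace (Rsum F (m + s)) with (Rsum F (s + m)) by (f_equal; lia). rewrite (Rsum_split F s m).
  rewrite Rplus_comm. f_equal.
  - apply Rsum_ext; intros i Hi. f_equal. replace (m + i + s)%nat with ((m + s) + i)%nat by lia.
    rewrite mod_small_or_sub by lia. destruct (Nat.ltb_spec (m + s + i) (m + s)); [lia|]. lia.
  - apply Rsum_ext; intros i Hi. f_equal. rewrite mod_small_or_sub by lia. destruct (Nat.ltb_spec (i + s) (m + s)); lia.
Qed.

Lemma Rsum_rotate (F : nat -> R) n s : (0 < n)%nat -> (s <= n)%nat ->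
  Rsum (fun i => F (Nat.modulo (i + s) n)) n = Rsum F n.
Proof. intros Hn Hs. replace n with ((n - s) + s)%nat by lia. apply Rsum_rotate_aux. lia. Qed.

Lemma Csum_rotate (F : nat -> Cx) n s : (0 < n)%nat -> (s <= n)%nat ->
  Csum (fun i => F (Nat.modulo (i + s) n)) n = Csum F n.
Proof. intros. apply Cx_ext; rewrite ?Csum_fst, ?Csum_snd.
  apply (Rsum_rotate (fun i => fst (F i))); auto. apply (Rsum_rotate (fun i => snd (F i))); auto. Qed.

Lemma Csum_const c m : Csum (fun _ => c) m = Cscal (INR m) c.
Proof. induction m; simpl Csum. Cx_ring.
  rewrite IHm, S_INR. Cx_ring. Qed.

Lemma circ_index i j n : (i < n)%nat -> (j < n)%nat ->
  Z.to_nat (Z.modulo (Z.of_nat i - Z.of_nat j) (Z.of_nat n)) = if Nat.leb j i then (i - j)%nat else (n + i - j)%nat.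
Proof. intros Hi Hj. destruct (Nat.leb_spec j i).
  - rewrite Z.mod_small by lia. lia.
  - assert (E : ((Z.of_nat i - Z.of_nat j) mod Z.of_nat n = Z.of_nat n + Z.of_nat i - Z.of_nat j)%Z).
    { rewrite <- (Z_mod_plus_full _ 1). rewrite Z.mod_small; lia. }
    rewrite E. lia.
Qed.

Lemma Csum_rotated_diff (a : Z -> Cx) n i j : (i < n)%nat -> (j < n)%nat ->
  let k := Z.to_nat (Z.modulo (Z.of_nat i - Z.of_nat j) (Z.of_nat n)) in
  Csum (fun s => a (Z.of_nat (Nat.modulo (i + s) n) - Z.of_nat (Nat.modulo (j + s) n))%Z) n
  = Cadd (Cscal (INR n - INR k) (a (Z.of_nat k))) (Cscal (INR k) (a (Z.of_nat k - Z.of_nat n)%Z)).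
Proof. intros Hi Hj k. assert (Hk : k = if Nat.leb j i then (i - j)%nat else (n + i - j)%nat) by (apply circ_index; auto).
  assert (Hkn : (k < n)%nat) by (rewrite Hk; destruct (Nat.leb_spec j i); lia).
  assert (Hn : (0 < n)%nat) by lia.
  set (F := fun s => a (Z.of_nat (Nat.modulo (i + s) n) - Z.of_nat (Nat.modulo (j + s) n))%Z).
  assert (E : Csum F n = Csum (fun u => F (Nat.modulo (u + (n - j)) n)) n).
  { symmetry; apply Csum_rotate; lia. }
  rewrite E. set (G := fun u => F (Nat.modulo (u + (n - j)) n)).
  replace (Csum G n) with (Csum G ((n - k) + k)) by (f_equal; lia). rewrite Csum_split.
  rewrite (Csum_ext G (fun _ => a (Z.of_nat k))). rewrite (Csum_ext (fun i0 => G (n - k + i0)%nat) (fun _ => a (Z.of_nat k - Z.of_nat n)%Z)).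
  - rewrite !Csum_const. rewrite minus_INR by lia. auto.
  - intros v Hv. unfold G, F. f_equal. rewrite Hk in *. destruct (Nat.leb_spec j i); modsimpl; lia.
  - intros u Hu. unfold G, F. f_equal. rewrite Hk in *. destruct (Nat.leb_spec j i); modsimpl; lia.
Qed.

Lemma rdot_expand n y X x : rdot n y (Mapply n X x) = Rsum (fun i => Rsum (fun j => Cdot (y i) (Cmul (X i j) (x j))) n) n.
Proof. unfold rdot, Mapply. apply Rsum_ext; intros. apply Cdot_Csum. Qed.

Lemma Cdot_Cmul_Csum a h b n : Rsum (fun r => Cdot a (Cmul (h r) b)) n = Cdot a (Cmul (Csum h n) b).
Proof. induction n; simpl. unfold Cdot, Cmul, C0; simpl; ring. rewrite IHn. unfold Cdot, Cmul, Cadd; simpl; ring. Qed.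

(* [c_n[g]] is the average of the conjugates of [A_n[g]] by the [n] cyclic shifts
   ([Csum_rotated_diff]), and shifting preserves norms. *)
Lemma circulant_pairing_bound g n G : (0 < n)%nat -> pairing_bound n (toeplitz g n) G -> pairing_bound n (opt_circulant g n) G.
Proof. intros Hn HT x y s Hs.
  set (sg := fun r i => Nat.modulo (i + r) n).
  assert (HC : forall i j, (i < n)%nat -> (j < n)%nat -> opt_circulant g n i j =
     Cscal (/ INR n) (Csum (fun r => toeplitz g n (sg r i) (sg r j)) n)).
  { intros i j Hi Hj. unfold opt_circulant, circ_coef, toeplitz, sg. rewrite (Csum_rotated_diff (fourier g) n i j Hi Hj). auto. }
  assert (Hrot : forall r, (r < n)%nat ->
     Rsum (fun i => Rsum (fun j => Cdot (y i) (Cmul (toeplitz g n (sg r i) (sg r j)) (x j))) n) n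
     = rdot n (fun l => y (sg (n - r)%nat l)) (Mapply n (toeplitz g n) (fun l => x (sg (n - r)%nat l)))).
  { intros r Hr. rewrite rdot_expand. symmetry.
    rewrite <- (Rsum_rotate (fun l => Rsum (fun m => Cdot (y (sg (n - r)%nat l)) (Cmul (toeplitz g n l m) (x (sg (n - r)%nat m)))) n) n r) by lia.
    apply Rsum_ext; intros i Hi.
    rewrite <- (Rsum_rotate (fun m => Cdot (y (sg (n - r)%nat (Nat.modulo (i + r) n))) (Cmul (toeplitz g n (Nat.modulo (i + r) n) m) (x (sg (n - r)%nat m)))) n r) by lia.
    apply Rsum_ext; intros j Hj. unfold sg.
    replace (Nat.modulo (Nat.modulo (i + r) n + (n - r)) n) with i by (modsimpl; lia).
    replace (Nat.modulo (Nat.modulo (j + r) n + (n - r)) n) with j by (modsimpl; lia). auto. }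
  assert (Hnr : forall (z : nat -> Cx) r, (r < n)%nat -> sqnorm n (fun l => z (sg (n - r)%nat l)) = sqnorm n z).
  { intros z r Hr. unfold sqnorm, sg. apply (Rsum_rotate (fun l => Cnorm2 (z l))); lia. }
  rewrite rdot_expand.
  rewrite Rsum_ext with (h := fun i => / INR n * Rsum (fun r => Rsum (fun j => Cdot (y i) (Cmul (toeplitz g n (sg r i) (sg r j)) (x j))) n) n).
  2: { intros i Hi. rewrite Rsum_swap. rewrite <- Rsum_scal. apply Rsum_ext; intros j Hj. rewrite HC by auto.
       rewrite Cdot_Cmul_Csum. unfold Cdot, Cscal, Cmul; simpl. ring. }
  rewrite Rsum_scal. rewrite Rsum_swap.
  rewrite Rsum_ext with (h := fun r => rdot n (fun l => y (sg (n - r)%nat l)) (Mapply n (toeplitz g n) (fun l => x (sg (n - r)%nat l)))) by (intros; apply Hrot; auto).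
  apply Rle_trans with (/ INR n * Rsum (fun _ => G * (s * sqnorm n y + sqnorm n x / s) / 2) n).
  - apply Rmult_le_compat_l. left; apply Rinv_0_lt_compat, lt_0_INR; auto.
    apply Rsum_le; intros r Hr. rewrite <- (Hnr y r Hr), <- (Hnr x r Hr). apply HT; auto.
  - right. rewrite Rsum_const. field. split; [lra|apply not_0_INR; lia].
Qed.

Lemma toeplitz_circulant_opnorm_le (g : R -> Cx) G n : (0 < n)%nat -> Rcont (fun t => fst (g t)) -> Rcont (fun t => snd (g t)) -> 0 <= G ->
  (forall t, - PI <= t <= PI -> fst (g t) ^ 2 + snd (g t) ^ 2 <= G ^ 2) ->
  opnorm_le n (toeplitz g n) G /\ opnorm_le n (opt_circulant g n) G.
Proof. intros Hn H1 H2 HG Hb. pose proof (toeplitz_pairing_bound g H1 H2 G n HG Hb).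
  split; apply opnorm_le_of_pairing_bound; auto. apply circulant_pairing_bound; auto. Qed.

Lemma Rsum_window_le (lo hi : nat) (beta : R) n : 0 <= beta ->
  Rsum (fun j => if andb (Nat.leb lo j) (Nat.ltb j hi) then beta else 0) n <= INR (Nat.min n hi - lo) * beta.
Proof. intros Hb. induction n. simpl. lra.
  change (Rsum (fun j => if andb (Nat.leb lo j) (Nat.ltb j hi) then beta else 0) (S n)) with
    (Rsum (fun j => if andb (Nat.leb lo j) (Nat.ltb j hi) then beta else 0) n + (if andb (Nat.leb lo n) (Nat.ltb n hi) then beta else 0)).
  assert (INR (Nat.min n hi - lo) <= INR (Nat.min (S n) hi - lo)) by (apply le_INR; lia).
  destruct (Nat.leb lo n) eqn:E1; destruct (Nat.ltb n hi) eqn:E2; cbn [andb].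
  - apply Nat.leb_le in E1. apply Nat.ltb_lt in E2.
    replace (Nat.min (S n) hi - lo)%nat with (S (Nat.min n hi - lo)) by lia. rewrite S_INR, Rmult_plus_distr_r. lra.
  - apply Rle_trans with (INR (Nat.min n hi - lo) * beta); [lra|apply Rmult_le_compat_r; lra].
  - apply Rle_trans with (INR (Nat.min n hi - lo) * beta); [lra|apply Rmult_le_compat_r; lra].
  - apply Rle_trans with (INR (Nat.min n hi - lo) * beta); [lra|apply Rmult_le_compat_r; lra].
Qed.

Lemma Rsum_band_le i N n beta : 0 <= beta ->
  Rsum (fun j => if orb (Nat.ltb (j + N) i) (Nat.ltb (i + N) j) then 0 else beta) n <= INR (2 * N + 1) * beta.
Proof. intros Hb. eapply Rle_trans.
  apply Rsum_le with (h := fun j => if andb (Nat.leb (i - N) j) (Nat.ltb j (i + N + 1)) then beta else 0).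
  { intros j Hj. destruct (Nat.ltb_spec (j + N) i); destruct (Nat.ltb_spec (i + N) j);
    destruct (Nat.leb_spec (i - N) j); destruct (Nat.ltb_spec j (i + N + 1)); simpl; lra || lia. }
  eapply Rle_trans. apply Rsum_window_le; auto. apply Rmult_le_compat_r; auto. apply le_INR; lia. Qed.

Section Trig.
Variables (p : R -> Cx) (N : nat) (B : R) (n : nat).
Hypothesis Hz : forall z, (Z.abs z > Z.of_nat N)%Z -> fourier p z = C0.
Hypothesis HB : forall z, Cnorm2 (fourier p z) <= B ^ 2.
Hypothesis Hn : (2 * N < n)%nat.

Definition circ_toep_diff : Mat := Msub (opt_circulant p n) (toeplitz p n).

(* Away from the first and last [N] rows the wrap-around coefficients [a_(k-n)]
   vanish, so [c_k - a_k = -(k/n) a_k]. *)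
Lemma circ_toep_diff_mid i j : (N <= i)%nat -> (i < n - N)%nat -> (j < n)%nat ->
  circ_toep_diff i j = Cscal (- INR (if Nat.leb j i then i - j else j - i)%nat / INR n) (fourier p (Z.of_nat i - Z.of_nat j)).
Proof. intros H1 H2 Hj. unfold circ_toep_diff, Msub, opt_circulant, toeplitz, circ_coef.
  rewrite circ_index by lia. assert (HnR : INR n <> 0) by (apply not_0_INR; lia).
  destruct (Nat.leb_spec j i).
  - rewrite (Hz (Z.of_nat (i - j) - Z.of_nat n)) by lia.
    replace (Z.of_nat (i - j)) with (Z.of_nat i - Z.of_nat j)%Z by lia.
    rewrite minus_INR by lia. generalize (fourier p (Z.of_nat i - Z.of_nat j)); intros c.
    Cx_field; auto.
  - rewrite (Hz (Z.of_nat (n + i - j))) by lia.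
    replace (Z.of_nat (n + i - j) - Z.of_nat n)%Z with (Z.of_nat i - Z.of_nat j)%Z by lia.
    rewrite !minus_INR, plus_INR by lia. generalize (fourier p (Z.of_nat i - Z.of_nat j)); intros c.
    Cx_field; auto.
Qed.

Lemma circ_toep_diff_mid_bound i j : (N <= i)%nat -> (i < n - N)%nat -> (j < n)%nat ->
  Cnorm2 (circ_toep_diff i j) <= if orb (Nat.ltb (j + N) i) (Nat.ltb (i + N) j) then 0 else (INR N * B / INR n) ^ 2.
Proof. intros H1 H2 Hj. rewrite circ_toep_diff_mid by auto. assert (HnR : 0 < INR n) by (apply lt_0_INR; lia).
  set (d := (if Nat.leb j i then i - j else j - i)%nat).
  destruct (orb (Nat.ltb (j + N) i) (Nat.ltb (i + N) j)) eqn:E.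
  - rewrite Hz. unfold Cnorm2, Cscal, C0; simpl; lra.
    apply Bool.orb_true_iff in E. destruct E as [E|E]; apply Nat.ltb_lt in E; lia.
  - apply Bool.orb_false_iff in E. destruct E as [E1 E2]. apply Nat.ltb_ge in E1. apply Nat.ltb_ge in E2.
    assert (Hd : (d <= N)%nat) by (unfold d; destruct (Nat.leb_spec j i); lia).
    assert (HdR : 0 <= INR d <= INR N) by (split; [apply pos_INR|apply le_INR; auto]).
    specialize (HB (Z.of_nat i - Z.of_nat j)%Z).
    set (bb := fourier p (Z.of_nat i - Z.of_nat j)) in *. clearbody bb.
    replace (Cnorm2 (Cscal (- INR d / INR n) bb)) with ((INR d / INR n) ^ 2 * Cnorm2 bb) by (unfold Cnorm2, Cscal; simpl; field; lra).
    replace ((INR N * B / INR n) ^ 2) with ((INR N / INR n) ^ 2 * B ^ 2) by (field; lra).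
    assert (0 <= INR d / INR n <= INR N / INR n).
    { split. apply Rmult_le_pos; [lra|left; apply Rinv_0_lt_compat; lra].
      apply Rmult_le_compat_r; [left; apply Rinv_0_lt_compat; lra|lra]. }
    apply Rmult_le_compat; [apply pow2_ge_0 | apply Cnorm2_nonneg | apply pow_incr; lra | auto].
Qed.

Lemma banded_diff_decomp : exists R0, rank_le n R0 (2 * N) /\
  forall d, 0 <= d -> INR (2 * N + 1) * (INR N * B) ^ 2 / INR n <= d ^ 2 ->
  opnorm_le n (Msub (Msub (opt_circulant p n) (toeplitz p n)) R0) d.
Proof.
  exists (fun i j => if orb (Nat.ltb i N) (Nat.leb (n - N) i) then circ_toep_diff i j else C0). split.
  - replace (2 * N)%nat with (N + N)%nat by lia. apply rank_le_border_rows. lia.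
    intros i j Hi Hj H1 H2. destruct (Nat.ltb_spec i N); destruct (Nat.leb_spec (n - N) i); simpl; auto; lia.
  - intros d Hd Hdd. apply opnorm_le_frobenius; auto. assert (HnR : 0 < INR n) by (apply lt_0_INR; lia).
    set (beta := (INR N * B / INR n) ^ 2).
    eapply Rle_trans with (Rsum (fun i => INR (2 * N + 1) * beta) n).
    + apply Rsum_le; intros i Hi. eapply Rle_trans; [|apply (Rsum_band_le i N n beta ltac:(apply pow2_ge_0))].
      apply Rsum_le; intros j Hj. fold (Msub (opt_circulant p n) (toeplitz p n)) in *. fold circ_toep_diff.
      assert (Hbeta : 0 <= beta) by apply pow2_ge_0.
      unfold Msub at 1. destruct (Nat.ltb i N) eqn:Ea; destruct (Nat.leb (n - N) i) eqn:Eb; cbn [orb].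
      1-3: replace (Csub (circ_toep_diff i j) (circ_toep_diff i j)) with C0 by (Cx_ring);
        unfold Cnorm2, C0; cbn [fst snd]; destruct (orb _ _); lra.
      apply Nat.ltb_ge in Ea. apply Nat.leb_gt in Eb.
      replace (Csub (circ_toep_diff i j) C0) with (circ_toep_diff i j) by (Cx_ring).
      apply circ_toep_diff_mid_bound; lia.
    + rewrite Rsum_const. eapply Rle_trans; [|exact Hdd]. right. unfold beta. field. lra.
Qed.
End Trig.

Lemma trig_poly_splitting p N B : (forall z, (Z.abs z > Z.of_nat N)%Z -> fourier p z = C0) ->
  (forall z, Cnorm2 (fourier p z) <= B ^ 2) -> forall d, 0 < d ->
  exists n0 : nat, forall n, (n > n0)%nat -> exists R0, rank_le n R0 (2 * N) /\
    opnorm_le n (Msub (Msub (opt_circulant p n) (toeplitz p n)) R0) d.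
Proof. intros Hz HB d Hd.
  set (Q := INR (2 * N + 1) * (INR N * B) ^ 2).
  destruct (nat_upper_bound (Q / d ^ 2)) as [n0 Hn0].
  exists (max n0 (2 * N)). intros n Hn.
  destruct (banded_diff_decomp p N B n Hz HB ltac:(lia)) as [R0 [Hrank Hband]].
  exists R0. split; auto. apply Hband; [lra|]. fold Q.
  assert (HnR : 0 < INR n) by (apply lt_0_INR; lia).
  assert (INR n0 <= INR n) by (apply le_INR; lia). assert (0 < d ^ 2) by (apply pow_lt; lra).
  apply Rmult_le_reg_r with (INR n / d ^ 2). apply Rdiv_lt_0_compat; lra.
  replace (Q / INR n * (INR n / d ^ 2)) with (Q / d ^ 2) by (field; lra).
  replace (d ^ 2 * (INR n / d ^ 2)) with (INR n) by (field; lra). lra.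
Qed.

(** * Fejer means *)

Definition cos_sum (M : nat) u := Rsum (fun j => cos (INR j * u)) M.
Definition sin_sum (M : nat) u := Rsum (fun j => sin (INR j * u)) M.

Lemma cos_sin_sums_geom M u : cos_sum M u * (cos u - 1) - sin_sum M u * sin u = cos (INR M * u) - 1 /\
                    cos_sum M u * sin u + sin_sum M u * (cos u - 1) = sin (INR M * u).
Proof. induction M; unfold cos_sum, sin_sum in *; simpl Rsum. simpl INR. rewrite !Rmult_0_l, cos_0, sin_0. split; ring.
  destruct IHM as [H1 H2]. rewrite S_INR. replace ((INR M + 1) * u) with (INR M * u + u) by ring.
  rewrite cos_plus, sin_plus. split; nra. Qed.

Lemma fejer_numerator_bound M u : (cos_sum M u ^ 2 + sin_sum M u ^ 2) * (2 - 2 * cos u) <= 4.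
Proof. destruct (cos_sin_sums_geom M u) as [H1 H2].
  replace ((cos_sum M u ^ 2 + sin_sum M u ^ 2) * (2 - 2 * cos u)) with
    ((cos_sum M u * (cos u - 1) - sin_sum M u * sin u) ^ 2 + (cos_sum M u * sin u + sin_sum M u * (cos u - 1)) ^ 2).
  rewrite H1, H2. pose proof (sin2_cos2 (INR M * u)). pose proof (COS_bound (INR M * u)). unfold Rsqr in H. nra.
  pose proof (sin2_cos2 u). unfold Rsqr in H. nra. Qed.

Definition freq (j l : nat) : Z := (Z.of_nat j - Z.of_nat l)%Z.

Definition fejer (M : nat) (u : R) : R :=
  / INR M * Rsum (fun j => Rsum (fun l => cos (IZR (freq j l) * u)) M) M.

Lemma fejer_eq M u : fejer M u = / INR M * (cos_sum M u ^ 2 + sin_sum M u ^ 2).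
Proof. unfold fejer, freq. f_equal. unfold cos_sum, sin_sum. simpl. rewrite !Rmult_1_r, !Rsum_mul_Rsum, <- Rsum_plus.
  apply Rsum_ext; intros j _. rewrite <- Rsum_plus. apply Rsum_ext; intros l _.
  rewrite IZR_sub_nat, Rmult_minus_distr_r, cos_minus. ring. Qed.

Lemma fejer_double_sums M u : (0 < M)%nat ->
  Rsum (fun j => Rsum (fun l => cos (IZR (freq j l) * u)) M) M = INR M * fejer M u /\
  Rsum (fun j => Rsum (fun l => sin (IZR (freq j l) * u)) M) M = 0.
Proof. intros HM. split.
  - unfold fejer. field. apply not_0_INR; lia.
  - transitivity (sin_sum M u * cos_sum M u - cos_sum M u * sin_sum M u); [|ring].
    unfold cos_sum, sin_sum. rewrite !Rsum_mul_Rsum, <- Rsum_minus.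
    apply Rsum_ext; intros j _. rewrite <- Rsum_minus. apply Rsum_ext; intros l _.
    unfold freq. rewrite IZR_sub_nat, Rmult_minus_distr_r, sin_minus. ring.
Qed.

Lemma fejer_nonneg M u : (0 < M)%nat -> 0 <= fejer M u.
Proof. intros H. rewrite fejer_eq. apply Rmult_le_pos. left; apply Rinv_0_lt_compat, lt_0_INR; auto. nra. Qed.

Lemma fejer_far M u c0 : (0 < M)%nat -> c0 < 1 -> cos u <= c0 -> fejer M u <= / INR M * (4 / (2 - 2 * c0)).
Proof. intros HM Hc Hu. rewrite fejer_eq. apply Rmult_le_compat_l. left; apply Rinv_0_lt_compat, lt_0_INR; auto.
  pose proof (fejer_numerator_bound M u). assert (0 < 2 - 2 * cos u) by lra.
  apply Rle_trans with (4 / (2 - 2 * cos u)).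
  - apply Rmult_le_reg_r with (2 - 2 * cos u); auto. unfold Rdiv. rewrite Rmult_assoc, Rinv_l by lra. lra.
  - unfold Rdiv. apply Rmult_le_compat_l. lra. apply Rinv_le_contravar; lra. Qed.

Lemma Rcont_fejer M : Rcont (fejer M).
Proof. unfold fejer. intros x. apply (Rcont_mult (fun _ => / INR M) (fun u => Rsum _ M)). solve_cont. solve_cont. Qed.

Lemma Ipi_fejer_shift M x : (0 < M)%nat -> Ipi (fun t => fejer M (x - t)) = 2 * PI.
Proof. intros HM. unfold fejer.
  rewrite Ipi_ext with (g := fun t => / INR M * Rsum (fun j => Rsum (fun l =>
     cos (IZR (freq j l) * x) * cos (IZR (freq j l) * t) + sin (IZR (freq j l) * x) * sin (IZR (freq j l) * t)) M) M).
  2: { intros t _. f_equal. apply Rsum_ext; intros; apply Rsum_ext; intros. rewrite Rmult_minus_distr_l, cos_minus. auto. }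
  rewrite Ipi_scal by solve_cont. rewrite Ipi_Rsum by (intros; solve_cont).
  rewrite Rsum_ext with (h := fun _ => 2 * PI).
  - rewrite Rsum_const. field. apply not_0_INR; lia.
  - intros j Hj. rewrite Ipi_Rsum by (intros; solve_cont).
    rewrite Rsum_ext with (h := fun l => if Nat.eqb l j then 2 * PI else 0).
    now rewrite (Rsum_single (fun _ => 2 * PI)) by auto.
    intros l Hl. rewrite Ipi_plus by solve_cont. rewrite !Ipi_scal by solve_cont. rewrite Ipi_sin_mul, Ipi_cos_int_mul.
    unfold freq. destruct (Nat.eqb_spec l j); destruct (Z.eqb_spec (Z.of_nat j - Z.of_nat l) 0); try lia.
    subst. replace (Z.of_nat j - Z.of_nat j)%Z with 0%Z by lia. simpl. rewrite Rmult_0_l, cos_0. ring. ring.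
Qed.

Lemma Rcont_comp F g : Rcont F -> Rcont g -> Rcont (fun t => F (g t)).
Proof. intros HF Hg x. apply (continuous_comp g F x); auto. Qed.

Lemma Rsum_add_mul_r a b c d n : Rsum (fun k => a k * c + b k * d) n = Rsum a n * c + Rsum b n * d.
Proof. induction n; simpl. ring. rewrite IHn. ring. Qed.
Lemma Rsum_sub_mul_r a b c d n : Rsum (fun k => a k * c - b k * d) n = Rsum a n * c - Rsum b n * d.
Proof. induction n; simpl. ring. rewrite IHn. ring. Qed.

Lemma Ipi_double_trig_zero (a b : nat -> nat -> R) (w : nat -> nat -> Z) M :
  (forall j l, (j < M)%nat -> (l < M)%nat -> w j l <> 0%Z) ->
  Ipi (fun t => Rsum (fun j => Rsum (fun l => a j l * cos (IZR (w j l) * t) - b j l * sin (IZR (w j l) * t)) M) M) = 0 /\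
  Ipi (fun t => Rsum (fun j => Rsum (fun l => a j l * sin (IZR (w j l) * t) + b j l * cos (IZR (w j l) * t)) M) M) = 0.
Proof. intros Hw.
  rewrite !(Ipi_Rsum (fun j t => Rsum _ M)) by (intros; solve_cont).
  split; rewrite <- (Rsum_zero M); apply Rsum_ext; intros j Hj; rewrite (Ipi_Rsum (fun l t => _)) by (intros; solve_cont);
    rewrite <- (Rsum_zero M); apply Rsum_ext; intros l Hl;
    rewrite ?Ipi_minus, ?Ipi_plus, !Ipi_scal, Ipi_sin_mul, Ipi_cos_int_mul by solve_cont;
    destruct (Z.eqb_spec (w j l) 0) as [E|_]; [destruct (Hw j l Hj Hl E)| |destruct (Hw j l Hj Hl E)|]; ring.
Qed.

Section Fejer.
Variables (f : R -> Cx) (M : nat).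
Hypothesis HM : (0 < M)%nat.
Hypothesis Hf1 : Rcont (fun t => fst (f t)).
Hypothesis Hf2 : Rcont (fun t => snd (f t)).

(* The Fejer mean [(f * K_M)(x) = (1/M) sum_(j,l<M) a_(j-l) e^(i(j-l)x)], written as a
   trigonometric polynomial; [fejer_re_conv] and [fejer_im_conv] identify it with the convolution. *)
Definition coef_re j l := fst (fourier f (freq j l)).
Definition coef_im j l := snd (fourier f (freq j l)).

Definition fejer_re (x : R) : R := / INR M * Rsum (fun j => Rsum (fun l =>
   coef_re j l * cos (IZR (freq j l) * x) - coef_im j l * sin (IZR (freq j l) * x)) M) M.
Definition fejer_im (x : R) : R := / INR M * Rsum (fun j => Rsum (fun l =>
   coef_re j l * sin (IZR (freq j l) * x) + coef_im j l * cos (IZR (freq j l) * x)) M) M.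
Definition fejer_mean (x : R) : Cx := (fejer_re x, fejer_im x).

Lemma Rcont_fejer_re : Rcont fejer_re.
Proof. unfold fejer_re. intros x. apply (Rcont_mult (fun _ => / INR M) (fun u => Rsum _ M)). solve_cont. solve_cont. Qed.
Lemma Rcont_fejer_im : Rcont fejer_im.
Proof. unfold fejer_im. intros x. apply (Rcont_mult (fun _ => / INR M) (fun u => Rsum _ M)). solve_cont. solve_cont. Qed.

Lemma Rcont_fejer_shift x : Rcont (fun t => fejer M (x - t)).
Proof. apply (Rcont_comp (fejer M) (fun t => x - t)). apply Rcont_fejer. solve_cont. Qed.

Lemma fourier_rotate (w : Z) x :
  fst (fourier f w) * cos (IZR w * x) - snd (fourier f w) * sin (IZR w * x)
    = / (2 * PI) * Ipi (fun t => fst (f t) * cos (IZR w * (x - t)) - snd (f t) * sin (IZR w * (x - t))) /\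
  fst (fourier f w) * sin (IZR w * x) + snd (fourier f w) * cos (IZR w * x)
    = / (2 * PI) * Ipi (fun t => fst (f t) * sin (IZR w * (x - t)) + snd (f t) * cos (IZR w * (x - t))).
Proof. rewrite fourier_Ipi by auto. cbn [fst snd].
  set (A := fun t => fst (f t) * cos (IZR w * t) + snd (f t) * sin (IZR w * t)).
  set (B := fun t => snd (f t) * cos (IZR w * t) - fst (f t) * sin (IZR w * t)).
  assert (HA : Rcont A) by (unfold A; solve_cont). assert (HB : Rcont B) by (unfold B; solve_cont).
  split.
  - rewrite (Ipi_ext (fun t => fst (f t) * cos (IZR w * (x - t)) - snd (f t) * sin (IZR w * (x - t)))
                      (fun t => cos (IZR w * x) * A t - sin (IZR w * x) * B t)).
    + rewrite (Ipi_minus (fun t => _ * A t) (fun t => _ * B t)), (Ipi_scal _ A HA), (Ipi_scal _ B HB) by solve_cont. ring.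
    + intros t _. unfold A, B. rewrite Rmult_minus_distr_l, cos_minus, sin_minus. ring.
  - rewrite (Ipi_ext (fun t => fst (f t) * sin (IZR w * (x - t)) + snd (f t) * cos (IZR w * (x - t)))
                      (fun t => sin (IZR w * x) * A t + cos (IZR w * x) * B t)).
    + rewrite (Ipi_plus (fun t => _ * A t) (fun t => _ * B t)), (Ipi_scal _ A HA), (Ipi_scal _ B HB) by solve_cont. ring.
    + intros t _. unfold A, B. rewrite Rmult_minus_distr_l, cos_minus, sin_minus. ring.
Qed.

Lemma fejer_re_conv x : fejer_re x = / (2 * PI) * Ipi (fun t => fst (f t) * fejer M (x - t)).
Proof. pose proof PI_RGT_0. assert (HMR : INR M <> 0) by (apply not_0_INR; lia).
  unfold fejer_re, coef_re, coef_im.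
  rewrite Rsum_ext with (h := fun j => / (2 * PI) * Rsum (fun l => Ipi (fun t =>
      fst (f t) * cos (IZR (freq j l) * (x - t)) - snd (f t) * sin (IZR (freq j l) * (x - t)))) M).
  2: { intros j _. rewrite <- Rsum_scal. apply Rsum_ext; intros l _. apply fourier_rotate. }
  rewrite Rsum_scal, <- Ipi_Rsum2 by (intros; solve_cont).
  rewrite Ipi_ext with (g := fun t => INR M * (fst (f t) * fejer M (x - t))).
  2: { intros t _. destruct (fejer_double_sums M (x - t) HM) as [Ec Es].
       rewrite <- (Rmult_1_r (fst (f t))), <- (Rmult_1_r (snd (f t))).
       rewrite Rsum_ext with (h := fun j => Rsum (fun l => cos (IZR (freq j l) * (x - t))) M * fst (f t)
                                           - Rsum (fun l => sin (IZR (freq j l) * (x - t))) M * snd (f t))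
         by (intros; rewrite <- Rsum_sub_mul_r; apply Rsum_ext; intros; ring).
       rewrite Rsum_sub_mul_r, Ec, Es. ring. }
  rewrite Ipi_scal by (apply Rcont_mult; auto; apply Rcont_fejer_shift). field. lra.
Qed.

Lemma fejer_im_conv x : fejer_im x = / (2 * PI) * Ipi (fun t => snd (f t) * fejer M (x - t)).
Proof. pose proof PI_RGT_0. assert (HMR : INR M <> 0) by (apply not_0_INR; lia).
  unfold fejer_im, coef_re, coef_im.
  rewrite Rsum_ext with (h := fun j => / (2 * PI) * Rsum (fun l => Ipi (fun t =>
      fst (f t) * sin (IZR (freq j l) * (x - t)) + snd (f t) * cos (IZR (freq j l) * (x - t)))) M).
  2: { intros j _. rewrite <- Rsum_scal. apply Rsum_ext; intros l _. apply fourier_rotate. }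
  rewrite Rsum_scal, <- Ipi_Rsum2 by (intros; solve_cont).
  rewrite Ipi_ext with (g := fun t => INR M * (snd (f t) * fejer M (x - t))).
  2: { intros t _. destruct (fejer_double_sums M (x - t) HM) as [Ec Es].
       rewrite <- (Rmult_1_r (fst (f t))), <- (Rmult_1_r (snd (f t))).
       rewrite Rsum_ext with (h := fun j => Rsum (fun l => sin (IZR (freq j l) * (x - t))) M * fst (f t)
                                           + Rsum (fun l => cos (IZR (freq j l) * (x - t))) M * snd (f t))
         by (intros; rewrite <- Rsum_add_mul_r; apply Rsum_ext; intros; ring).
       rewrite Rsum_add_mul_r, Ec, Es. ring. }
  rewrite Ipi_scal by (apply Rcont_mult; auto; apply Rcont_fejer_shift). field. lra.
Qed.

Lemma fejer_conv_approx (h : R -> R) x ep c0 Bf : Rcont h -> c0 < 1 -> 0 <= ep -> 0 <= Bf -> - PI <= x <= PI ->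
  (forall t, - PI <= t <= PI -> Rabs (h t) <= Bf) ->
  (forall t, - PI <= t <= PI -> c0 < cos (x - t) -> Rabs (h t - h x) <= ep) ->
  Rabs (/ (2 * PI) * Ipi (fun t => h t * fejer M (x - t)) - h x) <= ep + 2 * Bf * (/ INR M * (4 / (2 - 2 * c0))).
Proof. intros Hh Hc Hep HBf Hx Hb Hu. pose proof PI_RGT_0.
  set (k0 := / INR M * (4 / (2 - 2 * c0))).
  assert (Hk0 : 0 <= k0). { unfold k0. apply Rmult_le_pos. left; apply Rinv_0_lt_compat, lt_0_INR; auto.
    apply Rmult_le_pos. lra. left; apply Rinv_0_lt_compat; lra. }
  pose proof (Rcont_fejer_shift x) as HK.
  assert (E : / (2 * PI) * Ipi (fun t => h t * fejer M (x - t)) - h x = / (2 * PI) * Ipi (fun t => (h t - h x) * fejer M (x - t))).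
  { rewrite Ipi_ext with (f := fun t => (h t - h x) * fejer M (x - t)) (g := fun t => h t * fejer M (x - t) - h x * fejer M (x - t)) by (intros; ring).
    rewrite Ipi_minus, Ipi_scal, Ipi_fejer_shift by (auto || solve_cont). field. lra. }
  (* Near [x] the integrand is small by continuity; away from [x] the kernel is small. *)
  assert (Hpt : forall t, - PI <= t <= PI -> Rabs ((h t - h x) * fejer M (x - t)) <= ep * fejer M (x - t) + 2 * Bf * k0).
  { intros t Ht. pose proof (fejer_nonneg M (x - t) HM) as HKn. rewrite Rabs_mult, (Rabs_pos_eq (fejer M (x - t))) by auto.
    destruct (Rlt_le_dec c0 (cos (x - t))) as [Hc'|Hc'].
    - specialize (Hu t Ht Hc'). assert (Rabs (h t - h x) * fejer M (x - t) <= ep * fejer M (x - t)) by (apply Rmult_le_compat_r; auto).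
      assert (0 <= 2 * Bf * k0) by (apply Rmult_le_pos; lra). lra.
    - pose proof (fejer_far M (x - t) c0 HM Hc Hc') as Hf. fold k0 in Hf.
      assert (Rabs (h t - h x) <= 2 * Bf).
      { unfold Rminus. eapply Rle_trans. apply Rabs_triang. rewrite Rabs_Ropp. pose proof (Hb t Ht). pose proof (Hb x Hx). lra. }
      assert (0 <= ep * fejer M (x - t)) by (apply Rmult_le_pos; auto).
      assert (Rabs (h t - h x) * fejer M (x - t) <= 2 * Bf * k0) by (apply Rmult_le_compat; auto; apply Rabs_pos). lra. }
  assert (Hint : Ipi (fun t => ep * fejer M (x - t) + 2 * Bf * k0) = 2 * PI * (ep + 2 * Bf * k0)).
  { rewrite Ipi_plus, Ipi_scal, Ipi_fejer_shift, Ipi_const by (auto || solve_cont). ring. }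
  rewrite E, Rabs_mult, Rabs_pos_eq by (left; apply Rinv_0_lt_compat; lra).
  apply Rmult_le_reg_l with (2 * PI); [lra|]. rewrite <- Rmult_assoc, Rinv_r, Rmult_1_l, <- Hint by lra.
  apply Rabs_Ipi_le; [solve_cont|solve_cont|exact Hpt].
Qed.

End Fejer.

Lemma fourier_fejer_mean_high f M z : (Z.abs z > Z.of_nat (M - 1))%Z -> fourier (fejer_mean f M) z = C0.
Proof. intros Hz. pose proof (Rcont_fejer_re f M). pose proof (Rcont_fejer_im f M).
  assert (Hw : forall j l, (j < M)%nat -> (l < M)%nat -> (freq j l - z <> 0)%Z) by (intros; unfold freq; lia).
  destruct (Ipi_double_trig_zero (coef_re f) (coef_im f) (fun j l => freq j l - z)%Z M Hw) as [I1 I2].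
  (* Multiplying by [e^(-izt)] only shifts every frequency [freq j l] of the Fejer mean by [-z]. *)
  assert (Hshift : forall j l t,
    cos (IZR (freq j l - z) * t) = cos (IZR (freq j l) * t) * cos (IZR z * t) + sin (IZR (freq j l) * t) * sin (IZR z * t) /\
    sin (IZR (freq j l - z) * t) = sin (IZR (freq j l) * t) * cos (IZR z * t) - cos (IZR (freq j l) * t) * sin (IZR z * t)).
  { intros. rewrite minus_IZR, Rmult_minus_distr_r, cos_minus, sin_minus. split; ring. }
  rewrite fourier_Ipi by auto. unfold fejer_mean, C0. cbn [fst snd]. f_equal.
  - rewrite Ipi_ext with (g := fun t => / INR M * Rsum (fun j => Rsum (fun l => coef_re f j l * cos (IZR (freq j l - z) * t)
        - coef_im f j l * sin (IZR (freq j l - z) * t)) M) M).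
    { rewrite Ipi_scal, I1 by solve_cont. ring. }
    intros t _. unfold fejer_re, fejer_im.
    rewrite !Rmult_assoc, <- Rmult_plus_distr_l. f_equal.
    rewrite <- Rsum_add_mul_r. apply Rsum_ext; intros j _. rewrite <- Rsum_add_mul_r. apply Rsum_ext; intros l _.
    destruct (Hshift j l t) as [-> ->]. ring.
  - rewrite Ipi_ext with (g := fun t => / INR M * Rsum (fun j => Rsum (fun l => coef_re f j l * sin (IZR (freq j l - z) * t)
        + coef_im f j l * cos (IZR (freq j l - z) * t)) M) M).
    { rewrite Ipi_scal, I2 by solve_cont. ring. }
    intros t _. unfold fejer_re, fejer_im.
    rewrite !Rmult_assoc, <- Rmult_minus_distr_l. f_equal.
    rewrite <- Rsum_sub_mul_r. apply Rsum_ext; intros j _. rewrite <- Rsum_sub_mul_r. apply Rsum_ext; intros l _.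
    destruct (Hshift j l t) as [-> ->]. ring.
Qed.

Lemma cos_antimono a b : 0 <= a -> a <= b -> b <= PI -> cos b <= cos a.
Proof. intros H1 H2 H3. destruct (Req_dec a b). subst; lra. left; apply cos_decreasing_1; lra. Qed.

Lemma cos_le_far d u : 0 < d <= PI -> - (2 * PI) <= u <= 2 * PI ->
  d <= Rabs u -> d <= Rabs (u - 2 * PI) -> d <= Rabs (u + 2 * PI) -> cos u <= cos d.
Proof. intros Hd Hu H0 H1 H2.
  assert (Hv : exists v, cos u = cos v /\ d <= v /\ v <= 2 * PI - d).
  { destruct (Rle_dec 0 u).
    - exists u. rewrite Rabs_pos_eq in H0 by lra. rewrite Rabs_left1 in H1 by lra. split; auto; lra.
    - exists (- u). rewrite cos_neg. rewrite Rabs_left in H0 by lra. rewrite Rabs_pos_eq in H2 by lra. split; auto; lra. }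
  destruct Hv as [v [Ev [Hv1 Hv2]]]. rewrite Ev.
  destruct (Rle_dec v PI).
  - apply cos_antimono; lra.
  - replace (cos v) with (cos (2 * PI - v)). apply cos_antimono; lra.
    rewrite cos_minus, cos_2PI, sin_2PI. ring.
Qed.

(* Closeness of [x] and [t] modulo [2 pi] is measured by [cos (x - t)], as in [fejer_far]. *)
Lemma periodic_cos_unif_cont (f : R -> Cx) : continuity (fun x => fst (f x)) -> continuity (fun x => snd (f x)) ->
  (forall x, f (x + 2 * PI) = f x) ->
  forall ep, 0 < ep -> exists c0, c0 < 1 /\ forall x t, - PI <= x <= PI -> - PI <= t <= PI -> c0 < cos (x - t) ->
    Rabs (fst (f t) - fst (f x)) <= ep /\ Rabs (snd (f t) - snd (f x)) <= ep.
Proof. intros C1 C2 Hp ep Hep. pose proof PI_RGT_0.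
  set (X := fun c => - (3 * PI) <= c <= 3 * PI).
  assert (HX : compact X) by apply compact_P3.
  destruct (Heine (fun x => fst (f x)) X HX (fun x _ => C1 x) (mkposreal ep Hep)) as [d1 Hd1].
  destruct (Heine (fun x => snd (f x)) X HX (fun x _ => C2 x) (mkposreal ep Hep)) as [d2 Hd2].
  set (d := Rmin (Rmin d1 d2) PI).
  assert (Hd : 0 < d <= PI).
  { unfold d. split. apply Rmin_pos. apply Rmin_pos; apply cond_pos. auto. apply Rmin_r. }
  assert (Hdd : d <= d1 /\ d <= d2).
  { unfold d. pose proof (Rmin_l (Rmin d1 d2) PI). pose proof (Rmin_l d1 d2). pose proof (Rmin_r d1 d2). split; lra. }
  exists (cos d). split.
  { rewrite <- cos_0. apply cos_decreasing_1; lra. }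
  intros x t Hx Ht Hc.
  assert (Hpm : f (t - 2 * PI) = f t) by (rewrite <- (Hp (t - 2 * PI)); f_equal; ring).
  assert (Hq : exists q, f (t + q) = f t /\ - (3 * PI) <= t + q <= 3 * PI /\ Rabs (x - (t + q)) < d).
  { destruct (Rlt_le_dec (Rabs (x - t)) d) as [E|E].
    { exists 0. rewrite Rplus_0_r. repeat split; auto; lra. }
    destruct (Rlt_le_dec (Rabs (x - t - 2 * PI)) d) as [E2|E2].
    { exists (2 * PI). rewrite Hp. repeat split; auto; try lra. replace (x - (t + 2 * PI)) with (x - t - 2 * PI) by ring. auto. }
    destruct (Rlt_le_dec (Rabs (x - t + 2 * PI)) d) as [E3|E3].
    { exists (- (2 * PI)). replace (t + - (2 * PI)) with (t - 2 * PI) by ring. rewrite Hpm. repeat split; auto; try lra.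
      replace (x - (t - 2 * PI)) with (x - t + 2 * PI) by ring. auto. }
    exfalso. assert (cos (x - t) <= cos d) by (apply cos_le_far; auto; lra). lra. }
  destruct Hq as [q [Hfq [Hq1 Hq2]]].
  assert (HXx : X x) by (unfold X; lra). assert (HXt : X (t + q)) by (unfold X; lra).
  specialize (Hd1 x (t + q) HXx HXt ltac:(lra)). specialize (Hd2 x (t + q) HXx HXt ltac:(lra)).
  rewrite Hfq in Hd1, Hd2. simpl in Hd1, Hd2. rewrite Rabs_minus_sym in Hd1, Hd2. split; lra.
Qed.

Lemma C2pi_sq_bound (f : R -> Cx) : continuity (fun x => fst (f x)) -> continuity (fun x => snd (f x)) ->
  exists Kb, 1 <= Kb /\ forall t, - PI <= t <= PI -> fst (f t) ^ 2 + snd (f t) ^ 2 <= Kb ^ 2.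
Proof. intros C1 C2. pose proof PI_RGT_0.
  destruct (continuity_ab_maj (fun t => fst (f t) * fst (f t) + snd (f t) * snd (f t)) (- PI) PI ltac:(lra)) as [Mx [HM _]].
  { intros c _. apply continuity_pt_filterlim. pose proof (Rcont_of_continuity _ C1). pose proof (Rcont_of_continuity _ C2).
    assert (Rcont (fun t => fst (f t) * fst (f t) + snd (f t) * snd (f t))) by solve_cont. apply H2. }
  exists (Rmax 1 (fst (f Mx) * fst (f Mx) + snd (f Mx) * snd (f Mx))). split. apply Rmax_l.
  intros t Ht. specialize (HM t Ht). simpl in HM.
  set (K := Rmax 1 (fst (f Mx) * fst (f Mx) + snd (f Mx) * snd (f Mx))).
  assert (1 <= K) by apply Rmax_l. assert (fst (f Mx) * fst (f Mx) + snd (f Mx) * snd (f Mx) <= K) by apply Rmax_r. simpl.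
  assert (K <= K ^ 2) by nra. lra.
Qed.

Lemma Rcont_ext f g : (forall t, f t = g t) -> Rcont g -> Rcont f.
Proof. intros H Hg x. apply (continuous_ext g f x); auto. Qed.

Lemma fourier_sq_bound (h : R -> Cx) H z : Rcont (fun t => fst (h t)) -> Rcont (fun t => snd (h t)) -> 0 <= H ->
  (forall t, - PI <= t <= PI -> Rabs (fst (h t)) <= H /\ Rabs (snd (h t)) <= H) ->
  Cnorm2 (fourier h z) <= (3 * H) ^ 2.
Proof. intros C1 C2 HH Hb. pose proof PI_RGT_0. rewrite fourier_Ipi by auto.
  assert (mean : forall g : R -> R, Rcont g -> (forall t, - PI <= t <= PI -> Rabs (g t) <= 2 * H) ->
    - (2 * H) <= / (2 * PI) * Ipi g <= 2 * H).
  { intros g Cg Hg. apply Rabs_le_between. rewrite Rabs_mult, Rabs_pos_eq by (left; apply Rinv_0_lt_compat; lra).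
    apply Rmult_le_reg_l with (2 * PI); [lra|]. rewrite <- Rmult_assoc, Rinv_r, Rmult_1_l by lra.
    rewrite <- Ipi_const. apply Rabs_Ipi_le; auto. apply Rcont_const. }
  assert (trig : forall a b c d : R, Rabs a <= H -> Rabs b <= H -> Rabs c <= 1 -> Rabs d <= 1 ->
    Rabs (a * c + b * d) <= 2 * H /\ Rabs (a * c - b * d) <= 2 * H).
  { intros a b c d Ha Hb' Hc Hd. split; (eapply Rle_trans; [apply Rabs_triang|]); rewrite ?Rabs_Ropp, !Rabs_mult;
    assert (Rabs a * Rabs c <= H) by (rewrite <- (Rmult_1_r H); apply Rmult_le_compat; auto; apply Rabs_pos);
    assert (Rabs b * Rabs d <= H) by (rewrite <- (Rmult_1_r H); apply Rmult_le_compat; auto; apply Rabs_pos); lra. }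
  assert (K1 : - (2 * H) <= / (2 * PI) * Ipi (fun t => fst (h t) * cos (IZR z * t) + snd (h t) * sin (IZR z * t)) <= 2 * H).
  { apply mean. solve_cont. intros t Ht. destruct (Hb t Ht). apply trig; auto; apply Rabs_le; [apply COS_bound|apply SIN_bound]. }
  assert (K2 : - (2 * H) <= / (2 * PI) * Ipi (fun t => snd (h t) * cos (IZR z * t) - fst (h t) * sin (IZR z * t)) <= 2 * H).
  { apply mean. solve_cont. intros t Ht. destruct (Hb t Ht). apply trig; auto; apply Rabs_le; [apply COS_bound|apply SIN_bound]. }
  unfold Cnorm2; cbn [fst snd]. nra.
Qed.

Lemma fourier_add (f p g : R -> Cx) z : (forall t, f t = Cadd (p t) (g t)) ->
  Rcont (fun t => fst (p t)) -> Rcont (fun t => snd (p t)) -> Rcont (fun t => fst (g t)) -> Rcont (fun t => snd (g t)) ->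
  fourier f z = Cadd (fourier p z) (fourier g z).
Proof. intros Hf P1 P2 G1 G2. assert (F1 : Rcont (fun t => fst (f t))).
  { eapply Rcont_ext; [|apply Rcont_plus; [exact P1|exact G1]]. intros; rewrite Hf; auto. }
  assert (F2 : Rcont (fun t => snd (f t))).
  { eapply Rcont_ext; [|apply Rcont_plus; [exact P2|exact G2]]. intros; rewrite Hf; auto. }
  rewrite !fourier_Ipi by auto. unfold Cadd. cbn [fst snd]. f_equal.
  - rewrite <- Rmult_plus_distr_l. f_equal. rewrite <- Ipi_plus by solve_cont. apply Ipi_ext; intros; rewrite Hf; unfold Cadd; simpl; ring.
  - rewrite <- Rmult_plus_distr_l. f_equal. rewrite <- Ipi_plus by solve_cont. apply Ipi_ext; intros; rewrite Hf; unfold Cadd; simpl; ring.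
Qed.

(** * Low rank plus small norm *)

Lemma Rabs_le_of_Cnorm2_le a b K : 0 <= K -> a ^ 2 + b ^ 2 <= K ^ 2 -> Rabs a <= K /\ Rabs b <= K.
Proof. intros HK H. split; apply Rabs_le; split; nra. Qed.

Lemma fejer_uniform_approx f : in_C2pi f -> forall eta, 0 < eta ->
  exists M, forall x, - PI <= x <= PI ->
    Rabs (fejer_re f M x - fst (f x)) <= eta /\ Rabs (fejer_im f M x - snd (f x)) <= eta.
Proof.
  intros [C1 [C2 Hper]] eta Heta. pose proof PI_RGT_0.
  assert (F1 : Rcont (fun t => fst (f t))) by (apply Rcont_of_continuity; auto).
  assert (F2 : Rcont (fun t => snd (f t))) by (apply Rcont_of_continuity; auto).
  destruct (C2pi_sq_bound f C1 C2) as [Kb [HKb HKbnd]].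
  destruct (periodic_cos_unif_cont f C1 C2 Hper (eta / 2) ltac:(lra)) as [c0 [Hc0 Hunif]].
  set (D := 2 - 2 * c0). assert (HD : 0 < D) by (unfold D; lra).
  destruct (nat_upper_bound (16 * Kb / (D * eta))) as [M0 HM0].
  set (M := S M0). assert (HM : (0 < M)%nat) by (unfold M; lia).
  assert (HMR : 0 < INR M) by (apply lt_0_INR; auto).
  assert (Hkern : 2 * Kb * (/ INR M * (4 / (2 - 2 * c0))) <= eta / 2).
  { fold D. assert (INR M0 < INR M) by (apply lt_INR; unfold M; lia).
    assert (16 * Kb < INR M * (D * eta)).
    { apply Rmult_lt_reg_r with (/ (D * eta)). apply Rinv_0_lt_compat; nra.
      replace (INR M * (D * eta) * / (D * eta)) with (INR M) by (field; lra). lra. }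
    replace (2 * Kb * (/ INR M * (4 / D))) with (8 * Kb / (INR M * D)) by (field; lra).
    apply Rmult_le_reg_r with (INR M * D). nra. unfold Rdiv. rewrite Rmult_assoc, Rinv_l by nra. nra. }
  exists M. intros x Hx.
  split.
  - rewrite (fejer_re_conv f M HM F1 F2 x).
    eapply Rle_trans; [apply (fejer_conv_approx M HM (fun t => fst (f t)) x (eta / 2) c0 Kb); auto; try lra|lra].
    + intros t Ht. apply (Rabs_le_of_Cnorm2_le _ _ Kb ltac:(lra) (HKbnd t Ht)).
    + intros t Ht Hc. apply (Hunif x t Hx Ht Hc).
  - rewrite (fejer_im_conv f M HM F1 F2 x).
    eapply Rle_trans; [apply (fejer_conv_approx M HM (fun t => snd (f t)) x (eta / 2) c0 Kb); auto; try lra|lra].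
    + intros t Ht. apply (Rabs_le_of_Cnorm2_le _ _ Kb ltac:(lra) (HKbnd t Ht)).
    + intros t Ht Hc. apply (Hunif x t Hx Ht Hc).
Qed.

(* Split [f] as its Fejer mean [p] plus a uniformly small remainder [g]. *)
Lemma circulant_toeplitz_splitting f : in_C2pi f -> forall e, 0 < e ->
  exists r n0 : nat, forall n, (n > n0)%nat -> exists R0, rank_le n R0 r /\
    opnorm_le n (Msub (Msub (opt_circulant f n) (toeplitz f n)) R0) e.
Proof.
  intros Hf e He. pose proof Hf as [C1 [C2 _]]. pose proof PI_RGT_0.
  assert (F1 : Rcont (fun t => fst (f t))) by (apply Rcont_of_continuity; auto).
  assert (F2 : Rcont (fun t => snd (f t))) by (apply Rcont_of_continuity; auto).
  destruct (C2pi_sq_bound f C1 C2) as [Kb [HKb HKbnd]].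
  set (eta := e / 8).
  destruct (fejer_uniform_approx f Hf eta ltac:(unfold eta; lra)) as [M Ap].
  set (p := fejer_mean f M).
  set (g := fun t => (fst (f t) - fejer_re f M t, snd (f t) - fejer_im f M t)).
  assert (P1 : Rcont (fun t => fst (p t))) by exact (Rcont_fejer_re f M).
  assert (P2 : Rcont (fun t => snd (p t))) by exact (Rcont_fejer_im f M).
  assert (G1 : Rcont (fun t => fst (g t))) by (unfold g; cbn [fst snd]; solve_cont).
  assert (G2 : Rcont (fun t => snd (g t))) by (unfold g; cbn [fst snd]; solve_cont).
  assert (Hgb : forall t, - PI <= t <= PI -> fst (g t) ^ 2 + snd (g t) ^ 2 <= (2 * eta) ^ 2).
  { intros t Ht. destruct (Ap t Ht) as [A1 A2]. unfold g; cbn [fst snd].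
    rewrite Rabs_minus_sym in A1, A2. apply Rabs_le_between in A1. apply Rabs_le_between in A2. nra. }
  assert (Hlin : forall z, fourier f z = Cadd (fourier p z) (fourier g z)).
  { intros z. apply fourier_add; auto. intros t. unfold p, g, fejer_mean. Cx_ring. }
  set (B := 3 * (Kb + eta)).
  assert (HB : forall z, Cnorm2 (fourier p z) <= B ^ 2).
  { intros z. apply fourier_sq_bound; auto. unfold eta; lra. intros t Ht.
    destruct (Ap t Ht) as [A1 A2]. destruct (Rabs_le_of_Cnorm2_le _ _ Kb ltac:(lra) (HKbnd t Ht)) as [K1 K2].
    unfold p, fejer_mean; cbn [fst snd]. apply Rabs_le_between in A1. apply Rabs_le_between in A2.
    apply Rabs_le_between in K1. apply Rabs_le_between in K2. split; apply Rabs_le_between; lra. }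
  destruct (trig_poly_splitting p (M - 1) B (fourier_fejer_mean_high f M) HB (e / 2) ltac:(lra)) as [n0 Hsplit].
  exists (2 * (M - 1))%nat, (max n0 1). intros n Hn.
  destruct (Hsplit n ltac:(lia)) as [R0 [Hrank Hband]].
  exists R0. split; auto.
  destruct (toeplitz_circulant_opnorm_le g (2 * eta) n ltac:(lia) G1 G2 ltac:(unfold eta; lra) Hgb) as [HAg HCg].
  eapply opnorm_le_mono; [|eapply opnorm_le_ext with (X := Madd (Msub (Msub (opt_circulant p n) (toeplitz p n)) R0)
      (Msub (opt_circulant g n) (toeplitz g n)));
    [|apply opnorm_le_add; [exact Hband|apply opnorm_le_sub; [exact HCg|exact HAg]]]].
  - unfold eta. lra.
  - intros i j Hi Hj. unfold Madd, Msub, opt_circulant, toeplitz, circ_coef. rewrite !Hlin. Cx_ring.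
Qed.

Lemma sin_diff_lowrank_small Kb eps : 1 <= Kb -> 0 < eps ->
  exists (e : R) (m : nat), 0 < e /\ forall n C A R0 r,
    opnorm_le n C Kb -> opnorm_le n A Kb -> rank_le n R0 r ->
    opnorm_le n (Msub (Msub C A) R0) e ->
    exists Rn En : Mat,
      (forall i j, (i < n)%nat -> (j < n)%nat -> Msub (Msin n C) (Msin n A) i j = Madd Rn En i j) /\
      rank_le n Rn (m * m * r) /\ spec_norm_le n En eps.
Proof.
  intros HKb Heps.
  destruct (nat_upper_bound (Kb ^ 2)) as [N0 HN0].
  destruct (sin_major_cv0 Kb (eps / 8) ltac:(lra)) as [N1 HN1].
  set (m := max N0 N1).
  assert (Hm : Kb ^ 2 <= INR m + 1) by (assert (INR N0 <= INR m) by (apply le_INR; unfold m; lia); lra).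
  assert (Htail : sin_major Kb m < eps / 8).
  { specialize (HN1 m ltac:(unfold m; lia)). unfold Rdist in HN1. rewrite Rminus_0_r in HN1.
    apply Rabs_def2 in HN1. lra. }
  set (W := INR m * INR (2 * m) * Kb ^ (2 * m)).
  assert (HW : 0 <= W) by (unfold W; apply Rmult_le_pos; [apply Rmult_le_pos; apply pos_INR | apply pow_le; lra]).
  exists (eps / (2 * (W + 1))), m. split; [apply Rdiv_lt_0_compat; lra|].
  intros n C A R0 r HC HA Hr HE. apply (sin_diff_decomp n C A R0 r Kb _ m eps HKb HC HA Hr HE Hm).
  fold W. assert (W * (eps / (2 * (W + 1))) <= eps / 2).
  { apply Rmult_le_reg_r with (2 * (W + 1)). lra.
    replace (W * (eps / (2 * (W + 1))) * (2 * (W + 1))) with (W * eps) by (field; lra). nra. }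
  lra.
Qed.

Theorem mainTheorem5 :
  forall f : R -> Cx, in_C2pi f ->
  forall eps : R, eps > 0 ->
  exists N M : nat, (N > 0)%nat /\ (M > 0)%nat /\
    forall n : nat, (n > N)%nat ->
      exists Rn En : Mat,
        (forall i j, (i < n)%nat -> (j < n)%nat ->
           Msub (Msin n (opt_circulant f n)) (Msin n (toeplitz f n)) i j
           = Madd Rn En i j) /\
        rank_le n Rn (2 * M) /\
        spec_norm_le n En eps.
Proof.
  intros f Hf eps Heps. pose proof Hf as [C1 [C2 _]].
  destruct (C2pi_sq_bound f C1 C2) as [Kb [HKb HKbnd]].
  destruct (sin_diff_lowrank_small Kb eps HKb Heps) as [e [m [He Hsin]]].
  destruct (circulant_toeplitz_splitting f Hf e He) as [r [n0 Hsplit]].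
  exists (S n0), (m * m * r + 1)%nat. split; [lia|]. split; [lia|].
  intros n Hn. destruct (Hsplit n ltac:(lia)) as [R0 [Hr HE]].
  destruct (toeplitz_circulant_opnorm_le f Kb n ltac:(lia)
              (Rcont_of_continuity _ C1) (Rcont_of_continuity _ C2) ltac:(lra) HKbnd) as [HA HC].
  destruct (Hsin n _ _ R0 r HC HA Hr HE) as [Rn [En [Hdec [Hrank Hnorm]]]].
  exists Rn, En. split; [|split]; auto.
  apply rank_le_mono with (m * m * r)%nat; [lia|auto].
Qed.
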